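(* In the construction described in the context, for every $k\in\mathbb{N}$ the space $(P_k,\rho_k)$ is compact and $2$-quasiconvex. Moreover, $(P_\infty,\rho_\infty)$ is compact and $2$-quasiconvex, and the sets $i_k(P_k)$ converge to $P_\infty$ in the Hausdorff–Pompeiu distance of $(P_\infty,\rho_\infty)$.
   Context: Construction. Let $(e_n)$ be the canonical basis of $\ell^1(\mathbb{N})$; $\alpha(t)=t$ on $[0,\frac12]$, $\alpha(t)=1-t$ on $[\frac12,1]$; $S_n=\{te_1+\alpha(t)e_{n+1}:t\in[0,1]\}$; $x_n=(\frac12-\frac1{2^n})e_1$, $x_\infty=\frac12e_1$; $Y=\bigcup_{n\ge1}(2^{-(n+1)}S_n+x_n)\cup\{x_\infty\}$ with the $\ell^1$ metric $\theta$. $Y$ is the image of an arc-length parametrized injective curve $\gamma:[0,1]\to Y$ with $\gamma(0)=0$, $\gamma(1)=x_\infty$. For $r>0$ let $\theta_r(s,t)=r\,\theta(\gamma(s/r),\gamma(t/r))$ on $[0,r]$. Set $P_1=[0,1]$, $\rho_1=\theta_1$, $L_1=\{1\}$. Given $(P_k,\rho_k)$ with $P_k\subset[0,1]^k$ and $L_k\subset P_k$, let $\pi_k$ denote the $k$-th coordinate, choose a countable dense subset $Q_k=\{q_n:n\in\mathbb{N}\}$ (distinct $q_n$) of $P_k\setminus L_k$ with $\pi_k$ injective on $Q_k$ and $0\notin\pi_k(Q_k)$, set $r_n=2^{-(n+k)}$, $d_n=\theta_{r_n}$, and let $P_{k+1}=\{(x,0):x\in P_k\setminus Q_k\}\cup\{(q_n,y):n\in\mathbb{N},y\in[0,r_n]\}\subset[0,1]^{k+1}$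 with metric $\rho_{k+1}((x_1,y_1),(x_2,y_2))$ equal to $d_n(y_1,y_2)$ if $x_1=x_2=q_n$; $d_n(y_1,0)+\rho_k(x_1,x_2)+d_m(0,y_2)$ if $x_1=q_n,x_2=q_m$, $n\ne m$; $d_n(y_1,0)+\rho_k(x_1,x_2)$ if $x_1=q_n$, $x_2\notin Q_k$ (and symmetrically); $\rho_k(x_1,x_2)$ if $x_1,x_2\notin Q_k$. Let $L_{k+1}=(L_k\times\{0\})\cup\{(q_n,r_n):n\in\mathbb{N}\}$. Let $i_k:P_k\to[0,1]^{\mathbb{N}}$, $i_k(x)=(x_1,\dots,x_k,0,0,\dots)$; $\mathcal P_\infty=\bigcup_k i_k(P_k)$ with the metric $\rho_\infty(x,y)=\rho_k(i_k^{-1}x,i_k^{-1}y)$ for $x,y\in i_k(P_k)$; $(P_\infty,\rho_\infty)$ is the completion of $(\mathcal P_\infty,\rho_\infty)$. A metric space is $C$-quasiconvex if its intrinsic distance (infimum of lengths of continuous curves joining two points) is at most $C$ times its metric. Hausdorff–Pompeiu distance: $d_H(A,B)=\max\{\sup_{a\in A}\mathrm{dist}(a,B),\sup_{b\in B}\mathrm{dist}(b,A)\}$. *)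

From Stdlib Require Import Reals Lra Lia List Classical ClassicalEpsilon.
From Coquelicot Require Import Coquelicot.
Open Scope R_scope.

Definition is_metric {T : Type} (d : T -> T -> R) : Prop :=
  (forall x y, 0 <= d x y) /\ (forall x y, d x y = 0 <-> x = y) /\
  (forall x y, d x y = d y x) /\ (forall x y z, d x z <= d x y + d y z).

Definition cauchy_seq {T : Type} (d : T -> T -> R) (u : nat -> T) : Prop :=
  forall eps, 0 < eps -> exists N, forall n p, (N <= n)%nat -> (N <= p)%nat -> d (u n) (u p) < eps.

Definition complete_space {T : Type} (d : T -> T -> R) : Prop :=
  forall u, cauchy_seq d u -> exists l, forall eps, 0 < eps ->
    exists N, forall n, (N <= n)%nat -> d (u n) l < eps.

Definition open_in {T : Type} (X : T -> Prop) (d : T -> T -> R) (U : T -> Prop) : Prop :=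
  forall x, X x -> U x -> exists r, 0 < r /\ forall y, X y -> d x y < r -> U y.

Definition compact_space {T : Type} (X : T -> Prop) (d : T -> T -> R) : Prop :=
  forall (I : Type) (U : I -> T -> Prop),
    (forall i, open_in X d (U i)) -> (forall x, X x -> exists i, U i x) ->
    exists l : list I, forall x, X x -> exists i, In i l /\ U i x.

Fixpoint psum {T : Type} (d : T -> T -> R) (g : R -> T) (t : nat -> R) (n : nat) : R :=
  match n with
  | O => 0
  | S k => psum d g t k + d (g (t k)) (g (t (S k)))
  end.

Definition is_partition (a b : R) (t : nat -> R) (n : nat) : Prop :=
  t O = a /\ t n = b /\ forall i, (i < n)%nat -> t i <= t (S i).

Definition length_le {T : Type} (d : T -> T -> R) (g : R -> T) (a b L : R) : Prop :=
  forall t n, is_partition a b t n -> psum d g t n <= L.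

Definition length_is {T : Type} (d : T -> T -> R) (g : R -> T) (a b L : R) : Prop :=
  length_le d g a b L /\
  forall eps, 0 < eps -> exists t n, is_partition a b t n /\ L - eps < psum d g t n.

Definition curve_in {T : Type} (X : T -> Prop) (d : T -> T -> R) (g : R -> T) (a b : R) : Prop :=
  a <= b /\ (forall s, a <= s <= b -> X (g s)) /\
  (forall s, a <= s <= b -> forall eps, 0 < eps -> exists delta, 0 < delta /\
     forall s', a <= s' <= b -> Rabs (s' - s) < delta -> d (g s') (g s) < eps).

Definition quasiconvex {T : Type} (X : T -> Prop) (d : T -> T -> R) (C : R) : Prop :=
  forall x y, X x -> X y -> forall eps, 0 < eps ->
    exists a b (g : R -> T), curve_in X d g a b /\ g a = x /\ g b = y /\
      length_le d g a b (C * d x y + eps).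

Definition hausdorff_le {T : Type} (d : T -> T -> R) (A B : T -> Prop) (e : R) : Prop :=
  (forall a, A a -> forall e', e < e' -> exists b, B b /\ d a b < e') /\
  (forall b, B b -> forall e', e < e' -> exists a, A a /\ d b a < e').

(* Elements of l^1(N) are sequences nat -> R; e_1 is index 0,          *)
(* e_{n+1} is index n.                                                 *)

Definition theta (u v : nat -> R) : R := Series (fun i => Rabs (u i - v i)).

Definition alpha (t : R) : R := if Rle_dec t (1/2) then t else 1 - t.

Definition x_inf : nat -> R := fun i => if Nat.eqb i 0 then 1/2 else 0.

Definition Yset (y : nat -> R) : Prop :=
  (exists n : nat, (1 <= n)%nat /\ exists t, 0 <= t <= 1 /\
     y = fun i => if Nat.eqb i 0 then / 2 ^ (n + 1) * t + (1/2 - / 2 ^ n)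
                  else if Nat.eqb i n then / 2 ^ (n + 1) * alpha t else 0)
  \/ y = x_inf.

Definition gamma_hyp (gamma : R -> nat -> R) : Prop :=
  (forall t, 0 <= t <= 1 -> Yset (gamma t)) /\
  (forall y, Yset y -> exists t, 0 <= t <= 1 /\ gamma t = y) /\
  (forall s t, 0 <= s <= 1 -> 0 <= t <= 1 -> gamma s = gamma t -> s = t) /\
  gamma 0 = (fun _ => 0) /\ gamma 1 = x_inf /\
  (forall s t, 0 <= s -> s <= t -> t <= 1 -> length_is theta gamma s t (t - s)).

Definition theta_r (gamma : R -> nat -> R) (r s t : R) : R :=
  r * theta (gamma (s / r)) (gamma (t / r)).

(* The inductive construction.  Level m (nat) is the paper's k = m+1.  *)
(* Points of P_k are stored via i_k, i.e. as sequences nat -> R with    *)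
(* coordinates 0..m (x_1..x_k) and zeros afterwards.                     *)
(* q m n is the paper's q_{n+1} at stage k = m+1 (paper's N = {1,2,..}) *)

Definition trunc (m : nat) (x : nat -> R) : nat -> R :=
  fun i => if Nat.ltb i m then x i else 0.

(* r_n = 2^{-(n+k)} with paper indices n' = n+1, k = m+1 *)
Definition rad (m n : nat) : R := / 2 ^ (n + m + 2).

Definition idx (q : nat -> nat -> nat -> R) (m : nat) (x : nat -> R) : nat :=
  epsilon (inhabits 0%nat) (fun n => trunc (S m) x = q m n).

Fixpoint level (gamma : R -> nat -> R) (q : nat -> nat -> nat -> R) (m : nat)
  : ((nat -> R) -> Prop) * ((nat -> R) -> (nat -> R) -> R) * ((nat -> R) -> Prop) :=
  match m with
  | O =>
    ((fun x => 0 <= x O <= 1 /\ forall i, (0 < i)%nat -> x i = 0),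
     (fun x y => theta_r gamma 1 (x O) (y O)),
     (fun x => x O = 1 /\ forall i, (0 < i)%nat -> x i = 0))
  | S m' =>
    let '(P, rho, L) := level gamma q m' in
    let Q := fun x => exists n, x = q m' n in
    let d := fun n => theta_r gamma (rad m' n) in
    ((fun x => (forall i, (S m' < i)%nat -> x i = 0) /\
        ((P (trunc (S m') x) /\ ~ Q (trunc (S m') x) /\ x (S m') = 0) \/
         (exists n, trunc (S m') x = q m' n /\ 0 <= x (S m') <= rad m' n))),
     (fun x1 x2 =>
        let h1 := if excluded_middle_informative (Q (trunc (S m') x1))
                  then d (idx q m' x1) (x1 (S m')) 0 else 0 in
        let h2 := if excluded_middle_informative (Q (trunc (S m') x2))
                  then d (idx q m' x2) 0 (x2 (S m')) else 0 in
        if excluded_middle_informative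
             (Q (trunc (S m') x1) /\ trunc (S m') x1 = trunc (S m') x2)
        then d (idx q m' x1) (x1 (S m')) (x2 (S m'))
        else h1 + rho (trunc (S m') x1) (trunc (S m') x2) + h2),
     (fun x => (forall i, (S m' < i)%nat -> x i = 0) /\
        ((L (trunc (S m') x) /\ x (S m') = 0) \/
         (exists n, trunc (S m') x = q m' n /\ x (S m') = rad m' n))))
  end.

Definition Pk gamma q m := fst (fst (level gamma q m)).
Definition rhok gamma q m := snd (fst (level gamma q m)).
Definition Lk gamma q m := snd (level gamma q m).

Definition valid_choice (P : (nat -> R) -> Prop) (rho : (nat -> R) -> (nat -> R) -> R)
  (L : (nat -> R) -> Prop) (m : nat) (qm : nat -> nat -> R) : Prop :=
  (forall n, P (qm n) /\ ~ L (qm n)) /\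
  (forall n n', qm n = qm n' -> n = n') /\
  (forall n n', qm n m = qm n' m -> n = n') /\
  (forall n, qm n m <> 0) /\
  (forall x, P x -> ~ L x -> forall eps, 0 < eps -> exists n, rho x (qm n) < eps).

Definition choices_hyp gamma q : Prop :=
  forall m, valid_choice (Pk gamma q m) (rhok gamma q m) (Lk gamma q m) m (q m).

Definition Pinf gamma q (x : nat -> R) : Prop := exists m, Pk gamma q m x.

Definition rho_inf gamma q (x y : nat -> R) : R :=
  rhok gamma q (epsilon (inhabits 0%nat) (fun m => Pk gamma q m x /\ Pk gamma q m y)) x y.

Definition is_completion gamma q {T : Type} (d : T -> T -> R) (e : (nat -> R) -> T) : Prop :=
  is_metric d /\ complete_space d /\
  (forall x y, Pinf gamma q x -> Pinf gamma q y -> d (e x) (e y) = rho_inf gamma q x y) /\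
  (forall z eps, 0 < eps -> exists x, Pinf gamma q x /\ d (e x) z < eps).

From Stdlib Require Import Reals Lra Lia List Classical ClassicalEpsilon FunctionalExtensionality.
From Coquelicot Require Import Coquelicot.
Open Scope R_scope.

(* P_{k+1} is P_k with a hair of length r_n attached at each q_n, the hair carrying the
   metric theta_{r_n}.  Since gamma is parametrised by arc length and its e_1-coordinate
   is t/2, theta_r is 2-bi-Lipschitz to |s - t| on [0, r].  Two points of P_{k+1} are
   then joined by running down their hairs, along a path in P_k and up again, at a cost
   of at most twice rho_{k+1}; and since r_n -> 0 the compact hairs accumulate only on
   the compact P_k, so P_{k+1} is compact.  Every point of P_{k+j} lies within 2^{-k} of
   P_k: this gives the Hausdorff convergence and the total boundedness, hence the
   compactness, of the completion.  A point of the completion is reached from the dense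
   union of the P_k by concatenating infinitely many paths of geometrically decreasing
   length, so 2-quasiconvexity passes to the completion. *)

(** * Metric subspaces, Lipschitz paths and compactness *)

Record metric_on {T : Type} (X : T -> Prop) (d : T -> T -> R) : Prop := {
  metric_nonneg : forall x y, X x -> X y -> 0 <= d x y;
  metric_refl : forall x, X x -> d x x = 0;
  metric_sym : forall x y, X x -> X y -> d x y = d y x;
  metric_triangle : forall x y z, X x -> X y -> X z -> d x z <= d x y + d y z }.
Arguments metric_nonneg {T X d}.
Arguments metric_refl {T X d}.
Arguments metric_sym {T X d}.
Arguments metric_triangle {T X d}.

Lemma is_metric_metric_on {T : Type} (d : T -> T -> R) :
  is_metric d -> metric_on (fun _ => True) d.
Proof.
  intros [Hp [H0 [Hs Ht]]]. split; intros; auto. apply H0; reflexivity.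
Qed.

Lemma is_partition_bounds (a b : R) (t : nat -> R) (n : nat) :
  is_partition a b t n -> forall i, (i <= n)%nat -> a <= t i <= b.
Proof.
  intros [H0 [Hn Hm]].
  assert (A : forall i, (i <= n)%nat -> a <= t i).
  { induction i; intros Hi; [lra|].
    specialize (Hm i ltac:(lia)). specialize (IHi ltac:(lia)). lra. }
  assert (B : forall k i, (i + k = n)%nat -> t i <= b).
  { induction k; intros i Hi; [replace i with n by lia; lra|].
    specialize (IHk (S i) ltac:(lia)). specialize (Hm i ltac:(lia)). lra. }
  intros i Hi. split; [apply A; auto|apply (B (n - i)%nat); lia].
Qed.

Lemma psum_le_telescope {T : Type} (d : T -> T -> R) (g : R -> T) (b : R -> R) (t : nat -> R) (n : nat) :
  (forall i, (i < n)%nat -> d (g (t i)) (g (t (S i))) <= b (t (S i)) - b (t i)) ->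
  psum d g t n <= b (t n) - b (t O).
Proof.
  induction n; intros H; simpl; [lra|].
  pose proof (IHn (fun i Hi => H i ltac:(lia))). pose proof (H n ltac:(lia)). lra.
Qed.

Definition lip_path {T : Type} (X : T -> Prop) (d : T -> T -> R) (x y : T) (L : R) : Prop :=
  0 <= L /\ exists g : R -> T, g 0 = x /\ g L = y /\ (forall s, 0 <= s <= L -> X (g s)) /\
    (forall s t, 0 <= s <= L -> 0 <= t <= L -> d (g s) (g t) <= Rabs (s - t)).

Lemma quasiconvex_of_lip_paths {T : Type} (X : T -> Prop) (d : T -> T -> R) (C : R) :
  (forall x y, X x -> X y -> forall eps, 0 < eps ->
     exists L, L <= C * d x y + eps /\ lip_path X d x y L) ->
  quasiconvex X d C.
Proof.
  intros H x y Hx Hy eps Heps.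
  destruct (H x y Hx Hy eps Heps) as [L [HL [HL0 [g [g0 [gL [gX gd]]]]]]].
  exists 0, L, g. split; [|split; [exact g0|split; [exact gL|]]].
  - split; [lra|split; [exact gX|]].
    intros s Hs e He. exists e. split; [exact He|]. intros s' Hs' Hd.
    eapply Rle_lt_trans; [apply gd; auto|exact Hd].
  - intros t n Hp. pose proof (is_partition_bounds _ _ _ _ Hp) as Hb.
    destruct Hp as [H0 [Hn Hm]].
    enough (psum d g t n <= t n - t O) by lra.
    apply (psum_le_telescope d g (fun s => s)). intros i Hi.
    pose proof (Hm i Hi) as Hti.
    eapply Rle_trans; [apply gd; [apply (Hb i)|apply (Hb (S i))]; lia|].
    rewrite Rabs_minus_sym, Rabs_right; lra.
Qed.

Lemma lip_path_dist {T : Type} (X : T -> Prop) (d : T -> T -> R) x y L :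
  lip_path X d x y L -> d x y <= L.
Proof.
  intros [H0 [g [g0 [gL [_ gd]]]]]. rewrite <- g0, <- gL.
  eapply Rle_trans; [apply gd; lra|]. rewrite Rabs_left1; lra.
Qed.

Lemma lip_path_refl {T : Type} (X : T -> Prop) (d : T -> T -> R) x :
  metric_on X d -> X x -> lip_path X d x x 0.
Proof.
  intros Hm Hx. split; [lra|]. exists (fun _ => x). repeat split; auto.
  intros s t _ _. rewrite (metric_refl Hm x Hx). apply Rabs_pos.
Qed.

Lemma lip_path_rev {T : Type} (X : T -> Prop) (d : T -> T -> R) x y L :
  lip_path X d x y L -> lip_path X d y x L.
Proof.
  intros [H0 [g [g0 [gL [gX gd]]]]]. split; [exact H0|].
  exists (fun s => g (L - s)). split; [|split; [|split]].
  - rewrite Rminus_0_r; auto.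
  - replace (L - L) with 0 by lra; auto.
  - intros s Hs; apply gX; lra.
  - intros s t Hs Ht. replace (s - t) with ((L - t) - (L - s)) by lra.
    rewrite Rabs_minus_sym. apply gd; lra.
Qed.

Lemma lip_path_concat {T : Type} (X : T -> Prop) (d : T -> T -> R) x y z L1 L2 :
  metric_on X d -> lip_path X d x y L1 -> lip_path X d y z L2 -> lip_path X d x z (L1 + L2).
Proof.
  intros Hm [H1 [g1 [g10 [g1L [g1X g1d]]]]] [H2 [g2 [g20 [g2L [g2X g2d]]]]].
  assert (Xy : X y) by (rewrite <- g1L; apply g1X; lra).
  assert (Hcross : forall s t, 0 <= s <= L1 -> L1 <= t <= L1 + L2 ->
            d (g1 s) (g2 (t - L1)) <= t - s).
  { intros s t Hs Ht.
    eapply Rle_trans; [apply (metric_triangle Hm _ y); [apply g1X; lra|exact Xy|apply g2X; lra]|].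
    rewrite <- g1L at 1. rewrite <- g20 at 1.
    pose proof (g1d s L1 ltac:(lra) ltac:(lra)). pose proof (g2d 0 (t - L1) ltac:(lra) ltac:(lra)).
    rewrite Rabs_left1 in * by lra. lra. }
  split; [lra|].
  exists (fun s => if Rle_dec s L1 then g1 s else g2 (s - L1)).
  split; [|split; [|split]].
  - destruct (Rle_dec 0 L1); [exact g10|lra].
  - destruct (Rle_dec (L1 + L2) L1).
    + replace (L1 + L2) with L1 by lra. rewrite g1L, <- g20, <- g2L. f_equal. lra.
    + rewrite <- g2L. f_equal. lra.
  - intros s Hs. destruct (Rle_dec s L1); [apply g1X|apply g2X]; lra.
  - intros s t Hs Ht.
    destruct (Rle_dec s L1); destruct (Rle_dec t L1).
    + apply g1d; lra.
    + rewrite Rabs_left1 by lra. pose proof (Hcross s t ltac:(lra) ltac:(lra)). lra.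
    + rewrite (metric_sym Hm) by (apply g2X || apply g1X; lra).
      rewrite Rabs_right by lra. apply Hcross; lra.
    + replace (s - t) with ((s - L1) - (t - L1)) by lra. apply g2d; lra.
Qed.

Lemma lip_path_map {T T' : Type} (X : T -> Prop) (d : T -> T -> R) (X' : T' -> Prop)
  (d' : T' -> T' -> R) (f : T -> T') x y L :
  (forall a, X a -> X' (f a)) -> (forall a b, X a -> X b -> d' (f a) (f b) <= d a b) ->
  lip_path X d x y L -> lip_path X' d' (f x) (f y) L.
Proof.
  intros HX Hd [H0 [g [g0 [gL [gX gd]]]]]. split; [exact H0|].
  exists (fun s => f (g s)). split; [rewrite g0; auto|split; [rewrite gL; auto|split]].
  - intros s Hs; apply HX, gX; auto.
  - intros s t Hs Ht. eapply Rle_trans; [apply Hd; apply gX; auto|apply gd; auto].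
Qed.

Lemma lip_path_segment {T : Type} (X : T -> Prop) (d : T -> T -> R) (f : R -> T) a b :
  (forall s, a <= s <= b -> X (f s)) ->
  (forall s t, a <= s <= b -> a <= t <= b -> d (f s) (f t) <= Rabs (s - t)) ->
  forall u v, a <= u <= b -> a <= v <= b -> lip_path X d (f u) (f v) (Rabs (u - v)).
Proof.
  intros HX Hd u v Hu Hv. split; [apply Rabs_pos|].
  destruct (Rle_dec u v).
  - rewrite Rabs_left1 by lra.
    exists (fun s => f (u + s)). split; [|split; [|split]].
    + rewrite Rplus_0_r; auto.
    + f_equal; lra.
    + intros s Hs; apply HX; lra.
    + intros s t Hs Ht. replace (s - t) with ((u + s) - (u + t)) by lra. apply Hd; lra.
  - rewrite Rabs_right by lra.
    exists (fun s => f (u - s)). split; [|split; [|split]].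
    + rewrite Rminus_0_r; auto.
    + f_equal; lra.
    + intros s Hs; apply HX; lra.
    + intros s t Hs Ht. replace (s - t) with ((u - t) - (u - s)) by lra.
      rewrite Rabs_minus_sym. apply Hd; lra.
Qed.

Definition totally_bounded {T : Type} (X : T -> Prop) (d : T -> T -> R) : Prop :=
  forall eps, 0 < eps -> exists l : list T, forall x, X x -> exists p, In p l /\ X p /\ d p x < eps.

Lemma compact_totally_bounded {T : Type} (X : T -> Prop) (d : T -> T -> R) :
  metric_on X d -> compact_space X d -> totally_bounded X d.
Proof.
  intros Hm Hc eps He.
  destruct (Hc T (fun c y => X c /\ d c y < eps)) as [l Hl].
  - intros c y Hy [Hc' Hd]. exists (eps - d c y). split; [lra|].
    intros y' Hy' Hd'. split; [exact Hc'|]. pose proof (metric_triangle Hm c y y' Hc' Hy Hy'). lra.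
  - intros x Hx. exists x. split; [exact Hx|]. rewrite (metric_refl Hm x Hx); exact He.
  - exists l. intros x Hx. destruct (Hl x Hx) as [p [Hin [HXp Hd]]]. exists p; auto.
Qed.

Lemma half_pow_lt (y : R) : 0 < y -> exists N, forall n, (N <= n)%nat -> (/2)^n < y.
Proof.
  intros Hy. destruct (pow_lt_1_zero (/2) ltac:(rewrite Rabs_right; lra) y Hy) as [N HN].
  exists N. intros n Hn. specialize (HN n Hn). rewrite Rabs_right in HN; auto.
  apply Rle_ge, pow_le; lra.
Qed.

Definition no_finite_subcover {T I : Type} (U : I -> T -> Prop) (A : T -> Prop) : Prop :=
  ~ exists l : list I, forall x, A x -> exists i, In i l /\ U i x.

Lemma finite_subcover_app {T I : Type} (U : I -> T -> Prop) (A B : T -> Prop) (la lb : list I) :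
  (forall x, A x -> exists i, In i la /\ U i x) -> (forall x, B x -> exists i, In i lb /\ U i x) ->
  forall x, A x \/ B x -> exists i, In i (la ++ lb) /\ U i x.
Proof.
  intros Ha Hb x [Ax|Bx]; [destruct (Ha x Ax) as [i [Hi Ui]]|destruct (Hb x Bx) as [i [Hi Ui]]];
    exists i; (split; [apply in_or_app; auto|exact Ui]).
Qed.

Lemma no_finite_subcover_split {T I : Type} (U : I -> T -> Prop) (A : T -> Prop)
  (B : T -> T -> Prop) (l : list T) :
  (forall x, A x -> exists p, In p l /\ B p x) -> no_finite_subcover U A ->
  exists p, In p l /\ no_finite_subcover U (fun x => A x /\ B p x).
Proof.
  intros Hcov Hbad. apply NNPP. intro Hn. apply Hbad.
  assert (Hpiece : forall p, In p l ->
            exists li : list I, forall x, A x /\ B p x -> exists i, In i li /\ U i x).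
  { intros p Hp. apply NNPP. intro Hn2. apply Hn. exists p. split; auto. }
  assert (G : forall l', incl l' l -> exists li : list I,
            forall x, A x /\ (exists p, In p l' /\ B p x) -> exists i, In i li /\ U i x).
  { induction l' as [|a l' IH]; intros Hinc.
    - exists nil. intros x [_ [p [[] _]]].
    - destruct IH as [li Hli]; [intros z Hz; apply Hinc; right; exact Hz|].
      destruct (Hpiece a (Hinc a (or_introl eq_refl))) as [la Hla].
      exists (la ++ li). intros x [Ax [p [[<-|Hp] Bp]]];
        apply (finite_subcover_app U _ _ la li Hla Hli); [left|right]; eauto. }
  destruct (G l (incl_refl l)) as [li Hli]. exists li. intros x Ax. apply Hli. auto.
Qed.

(* A cover without finite subcover yields nested balls of radii 2^-k without finite
   subcover; their centres form a Cauchy sequence whose limit no cover member can contain. *)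
Section NestedBalls.

Context {T : Type} (d : T -> T -> R) (Hm : metric_on (fun _ => True) d).
Hypothesis Htb : totally_bounded (fun _ => True) d.
Context {I : Type} (U : I -> T -> Prop) (inh : inhabited T).
Hypothesis Hbad : no_finite_subcover U (fun _ => True).

Definition nested_center (k : nat) (A : T -> Prop) : T :=
  epsilon inh (fun c => no_finite_subcover U (fun x => A x /\ d c x < (/2)^k)).

Fixpoint nested_set (k : nat) : T -> Prop :=
  match k with
  | O => fun _ => True
  | S k => fun x => nested_set k x /\ d (nested_center k (nested_set k)) x < (/2)^k
  end.

Lemma nested_set_no_finite_subcover k : no_finite_subcover U (nested_set k).
Proof.
  induction k as [|k IH]; [exact Hbad|].
  apply (epsilon_spec inh (fun c => no_finite_subcover U (fun x => nested_set k x /\ d c x < (/2)^k))).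
  destruct (Htb ((/2)^k) ltac:(apply pow_lt; lra)) as [l Hl].
  destruct (no_finite_subcover_split U (nested_set k) (fun p x => d p x < (/2)^k) l) as [p [_ Hp]];
    [|exact IH|exists p; exact Hp].
  intros x _. destruct (Hl x Logic.I) as [p [Hp [_ Hd]]]. exists p; auto.
Qed.

Lemma nested_set_decr j k : (j <= k)%nat -> forall x, nested_set k x -> nested_set j x.
Proof. induction 1; auto. intros x [Hx _]; auto. Qed.

Definition nested_point (k : nat) : T := epsilon inh (nested_set (S k)).

Lemma nested_point_close j k : (j <= k)%nat ->
  d (nested_center j (nested_set j)) (nested_point k) < (/2)^j.
Proof.
  intros Hjk.
  assert (Hin : nested_set (S k) (nested_point k)).
  { apply (epsilon_spec inh (nested_set (S k))). apply NNPP. intro Hk.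
    apply (nested_set_no_finite_subcover (S k)). exists nil. intros x Hx.
    exfalso. apply Hk. exists x; exact Hx. }
  exact (proj2 (nested_set_decr (S j) (S k) ltac:(lia) _ Hin)).
Qed.

Lemma nested_point_cauchy : cauchy_seq d nested_point.
Proof.
  intros eps He. destruct (half_pow_lt (eps / 2) ltac:(lra)) as [N HN].
  exists N. intros n p Hn Hp.
  pose proof (nested_point_close N n Hn). pose proof (nested_point_close N p Hp).
  pose proof (HN N (le_n N)). set (c := nested_center N (nested_set N)) in *.
  pose proof (metric_triangle Hm (nested_point n) c (nested_point p) Logic.I Logic.I Logic.I).
  rewrite (metric_sym Hm (nested_point n) c Logic.I Logic.I) in *. lra.
Qed.

Lemma nested_limit_not_covered (z : T) (i : I) (r : R) : 0 < r ->
  (forall y, d z y < r -> U i y) ->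
  (forall eps, 0 < eps -> exists N, forall n, (N <= n)%nat -> d (nested_point n) z < eps) -> False.
Proof.
  intros Hr Hball Hz.
  destruct (half_pow_lt (r / 3) ltac:(lra)) as [j Hj]. specialize (Hj j (le_n j)).
  destruct (Hz (r / 3) ltac:(lra)) as [N HN].
  set (n := max N j).
  pose proof (HN n ltac:(lia)) as H1. pose proof (nested_point_close j n ltac:(lia)) as H2.
  set (c := nested_center j (nested_set j)) in *.
  apply (nested_set_no_finite_subcover (S j)). exists (i :: nil). intros x [_ Hx]. fold c in Hx.
  exists i. split; [left; reflexivity|]. apply Hball.
  pose proof (metric_triangle Hm z (nested_point n) x Logic.I Logic.I Logic.I).
  pose proof (metric_triangle Hm (nested_point n) c x Logic.I Logic.I Logic.I).
  rewrite (metric_sym Hm z (nested_point n) Logic.I Logic.I) in *.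
  rewrite (metric_sym Hm (nested_point n) c Logic.I Logic.I) in *. lra.
Qed.

End NestedBalls.

Lemma complete_totally_bounded_compact {T : Type} (d : T -> T -> R) :
  metric_on (fun _ => True) d -> complete_space d -> totally_bounded (fun _ => True) d ->
  compact_space (fun _ => True) d.
Proof.
  intros Hm Hc Htb I U Hop Hcov. apply NNPP. intro Hn.
  assert (Hbad : no_finite_subcover U (fun _ => True)).
  { intros [l Hl]. apply Hn. exists l. intros x _. apply Hl; auto. }
  assert (inh : inhabited T).
  { apply NNPP. intro Hi. apply Hbad. exists nil. intros x. exfalso. exact (Hi (inhabits x)). }
  destruct (Hc (nested_point d U inh) (nested_point_cauchy d Hm Htb U inh Hbad)) as [z Hz].
  destruct (Hcov z Logic.I) as [i Hi]. destruct (Hop i z Logic.I Hi) as [r [Hr Hball]].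
  apply (nested_limit_not_covered d Hm Htb U inh Hbad z i r Hr); auto.
Qed.

Lemma list_pos_lower_bound {A : Type} (l : list A) (f : A -> R) :
  exists delta, 0 < delta /\ forall a, In a l -> 0 < f a -> delta <= f a.
Proof.
  induction l as [|a l [dl [Hdl Hl]]]; [exists 1; split; [lra|intros a []]|].
  destruct (Rlt_dec 0 (f a)).
  - exists (Rmin (f a) dl). split; [apply Rmin_glb_lt; auto|].
    intros b [<-|Hb] Hfb; [apply Rmin_l|]. eapply Rle_trans; [apply Rmin_r|apply Hl; auto].
  - exists dl. split; [exact Hdl|]. intros b [<-|Hb] Hfb; [lra|apply Hl; auto].
Qed.

Lemma open_in_sub {T : Type} (X Y : T -> Prop) (d : T -> T -> R) (V : T -> Prop) :
  (forall x, X x -> Y x) -> open_in Y d V -> open_in X d V.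
Proof.
  intros HXY HV x Xx Vx. destruct (HV x (HXY x Xx) Vx) as [r [Hr Hball]].
  exists r. split; [exact Hr|]. intros y Xy Hd. apply Hball; auto.
Qed.

Lemma compact_space_ext {T : Type} (X X' : T -> Prop) (d d' : T -> T -> R) :
  compact_space X d -> (forall y, X y <-> X' y) -> (forall x y, X x -> X y -> d x y = d' x y) ->
  compact_space X' d'.
Proof.
  intros Hc HX Hd I U Hop Hcov.
  destruct (Hc I U) as [l Hl].
  - intros i x Hx Hu. destruct (Hop i x (proj1 (HX x) Hx) Hu) as [r [Hr Hball]].
    exists r. split; [exact Hr|]. intros y Hy Hxy. apply Hball; [apply HX; auto|rewrite <- Hd; auto].
  - intros x Hx. apply Hcov, HX; auto.
  - exists l. intros x Hx. apply Hl, HX; auto.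
Qed.

(* A Lebesgue number for the cover, measured from the compact set X into the ambient Y. *)
Lemma compact_uniform_cover {T I : Type} (X Y : T -> Prop) (d : T -> T -> R) (U : I -> T -> Prop) :
  metric_on Y d -> (forall x, X x -> Y x) -> compact_space X d ->
  (forall i, open_in Y d (U i)) -> (forall x, X x -> exists i, U i x) ->
  exists delta (li : list I), 0 < delta /\
    forall x y, X x -> Y y -> d x y < delta -> exists i, In i li /\ U i y.
Proof.
  intros Hm HXY HcX Hop Hcov.
  pose (V := fun (j : T * I * R) y => let '(c, i, r) := j in
          X y /\ Y c /\ 0 < r /\ (forall y', Y y' -> d c y' < 2 * r -> U i y') /\ d c y < r).
  destruct (HcX (T * I * R)%type V) as [l Hl].
  - intros [[c i] r] y Xy [_ [Yc [Hr [HU Hd]]]]. exists (r - d c y). split; [lra|].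
    intros y' Xy' Hd'. repeat split; auto.
    pose proof (metric_triangle Hm c y y' Yc (HXY _ Xy) (HXY _ Xy')). lra.
  - intros x Xx. destruct (Hcov x Xx) as [i Ui].
    destruct (Hop i x (HXY _ Xx) Ui) as [r [Hr HU]].
    exists (x, i, r / 2). simpl. repeat split; auto; [lra| |].
    + intros y' Yy' Hd. apply HU; auto. lra.
    + rewrite (metric_refl Hm x (HXY _ Xx)). lra.
  - destruct (list_pos_lower_bound l (fun j => snd j)) as [delta [Hdel Hdl]].
    exists delta, (map (fun j => snd (fst j)) l). split; [exact Hdel|].
    intros x y Xx Yy Hd. destruct (Hl x Xx) as [[[c i] r] [Hin HV]].
    destruct HV as [_ [Yc [Hr [HU Hdc]]]]. exists i. split.
    + apply (in_map (fun j : T * I * R => snd (fst j)) l (c, i, r)); exact Hin.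
    + apply HU; [exact Yy|]. pose proof (Hdl _ Hin Hr). simpl in *.
      pose proof (metric_triangle Hm c x y Yc (HXY _ Xx) Yy). lra.
Qed.

Lemma finite_subcover_of_finitely_many {T I : Type} (S : nat -> T -> Prop) (U : I -> T -> Prop) :
  (forall n, exists l : list I, forall y, S n y -> exists i, In i l /\ U i y) ->
  forall N, exists L : list I, forall n, (n < N)%nat -> forall y, S n y -> exists i, In i L /\ U i y.
Proof.
  intros H N. induction N as [|N [L HL]]; [exists nil; intros n Hn; lia|].
  destruct (H N) as [l Hl]. exists (l ++ L). intros n Hn y Hy.
  destruct (Nat.eq_dec n N) as [->|Hne].
  - destruct (Hl y Hy) as [i [Hi Ui]]. exists i. split; [apply in_or_app; left|]; auto.
  - destruct (HL n ltac:(lia) y Hy) as [i [Hi Ui]]. exists i. split; [apply in_or_app; right|]; auto.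
Qed.

Lemma compact_accumulating_union {T : Type} (X Y : T -> Prop) (S : nat -> T -> Prop)
  (d : T -> T -> R) :
  metric_on Y d -> (forall x, X x -> Y x) -> (forall n y, S n y -> Y y) ->
  (forall y, Y y -> X y \/ exists n, S n y) ->
  compact_space X d -> (forall n, compact_space (S n) d) ->
  (forall delta, 0 < delta -> exists N, forall n, (N <= n)%nat ->
     forall y, S n y -> exists x, X x /\ d x y < delta) ->
  compact_space Y d.
Proof.
  intros Hm HXY HSY HY HcX HcS Hclose I U Hop Hcov.
  destruct (compact_uniform_cover X Y d U Hm HXY HcX Hop (fun x Xx => Hcov x (HXY x Xx)))
    as [delta [li [Hdel Hli]]].
  destruct (Hclose delta Hdel) as [N HN].
  destruct (finite_subcover_of_finitely_many S U) with (N := N) as [L HL].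
  { intros n. apply (HcS n I U).
    - intros i. apply (open_in_sub _ Y); [apply HSY|apply Hop].
    - intros y Sy. apply Hcov, (HSY n), Sy. }
  exists (li ++ L). intros y Yy.
  destruct (HY y Yy) as [Xy|[n Sy]].
  - destruct (Hli y y Xy Yy) as [i [Hi Ui]]; [rewrite (metric_refl Hm y Yy); exact Hdel|].
    exists i. split; [apply in_or_app; left|]; auto.
  - destruct (Compare_dec.le_lt_dec N n) as [HNn|HnN].
    + destruct (HN n HNn y Sy) as [x [Xx Hd]]. destruct (Hli x y Xx Yy Hd) as [i [Hi Ui]].
      exists i. split; [apply in_or_app; left|]; auto.
    + destruct (HL n HnN y Sy) as [i [Hi Ui]]. exists i. split; [apply in_or_app; right|]; auto.
Qed.

Lemma compact_lipschitz_image {T : Type} (d : T -> T -> R) (f : R -> T) (a b : R) :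
  (forall s t, a <= s <= b -> a <= t <= b -> d (f s) (f t) <= Rabs (s - t)) ->
  compact_space (fun y => exists h, a <= h <= b /\ y = f h) d.
Proof.
  intros Hf I U Hop Hcov.
  destruct (Rle_dec a b) as [Hab|Hab]; [|exists nil; intros x [h [Hh _]]; lra].
  destruct (Hcov (f a) (ex_intro _ a (conj (conj (Rle_refl a) Hab) eq_refl))) as [i0 _].
  assert (inh : inhabited (I * R)) by exact (inhabits (i0, 1)).
  pose (Pch := fun h (p : I * R) => 0 < snd p /\
    forall y, (exists h', a <= h' <= b /\ y = f h') -> d (f h) y < snd p -> U (fst p) y).
  pose (ch := fun h => epsilon inh (Pch h)).
  assert (Hch : forall h, a <= h <= b -> Pch h (ch h)).
  { intros h Hh. apply (epsilon_spec inh (Pch h)).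
    destruct (Hcov (f h) (ex_intro _ h (conj Hh eq_refl))) as [i Ui].
    destruct (Hop i (f h) (ex_intro _ h (conj Hh eq_refl)) Ui) as [r [Hr Hball]].
    exists (i, r). split; auto. }
  assert (Hcond : forall x, (exists y, a <= x <= b /\ Rabs (y - x) < snd (ch x)) -> a <= x <= b).
  { intros x [y [H _]]. exact H. }
  pose (fam := mkfamily (fun x => a <= x <= b)
                 (fun x y => a <= x <= b /\ Rabs (y - x) < snd (ch x)) Hcond).
  destruct (compact_P3 a b fam) as [D [Hcov' [l Hl]]].
  - split.
    + intros h Hh. exists h. simpl. split; [exact Hh|].
      unfold Rminus; rewrite Rplus_opp_r, Rabs_R0. apply (Hch h Hh).
    + intros x y [Hx Hy].
      assert (Hp : 0 < snd (ch x) - Rabs (y - x)) by lra.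
      exists (mkposreal _ Hp). intros z Hz. unfold disc in Hz. simpl in *. split; [exact Hx|].
      pose proof (Rabs_triang (z - y) (y - x)). replace (z - y + (y - x)) with (z - x) in H by lra.
      lra.
  - exists (map (fun x => fst (ch x)) l). intros y [h [Hh ->]].
    destruct (Hcov' h Hh) as [x [[Hx Hxh] HDx]]. simpl in *.
    exists (fst (ch x)). split; [apply (in_map (fun x => fst (ch x))), Hl; split; auto|].
    apply (proj2 (Hch x Hx)); [exists h; auto|].
    eapply Rle_lt_trans; [apply Hf; auto|]. rewrite Rabs_minus_sym; exact Hxh.
Qed.

(** * Infinite concatenation of paths and dense subspaces *)

Fixpoint prefix_sum (l : nat -> R) (k : nat) : R :=
  match k with O => 0 | S k => prefix_sum l k + l k end.

Lemma prefix_sum_mono (l : nat -> R) : (forall j, 0 <= l j) ->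
  forall a b, (a <= b)%nat -> prefix_sum l a <= prefix_sum l b.
Proof. intros H a b Hab. induction Hab; simpl; [lra|]. specialize (H m). lra. Qed.

Lemma prefix_sum_geometric_le (l : nat -> R) (c : R) :
  (forall j, l j <= c * (/2)^j) -> forall k, prefix_sum l k <= 2 * c * (1 - (/2)^k).
Proof.
  intros Hl k. induction k as [|k IH]; simpl; [lra|].
  specialize (Hl k). replace (2 * c * (1 - / 2 * (/ 2) ^ k)) with (2 * c * (1 - (/2)^k) + c * (/2)^k)
    by field. lra.
Qed.

Section InfiniteConcatenation.

Context {T : Type} (d : T -> T -> R) (Hm : is_metric d).
Context (p : nat -> T) (l : nat -> R) (g : nat -> R -> T) (z : T) (S : R).
Hypothesis Hl : forall j, 0 <= l j.
Hypothesis Hg : forall j, g j 0 = p j /\ g j (l j) = p (Datatypes.S j) /\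
  forall s t, 0 <= s <= l j -> 0 <= t <= l j -> d (g j s) (g j t) <= Rabs (s - t).
Hypothesis HS1 : forall k, prefix_sum l k <= S.
Hypothesis HS2 : forall eps, 0 < eps -> exists k, S - eps < prefix_sum l k.
Hypothesis Hz : forall eps, 0 < eps -> exists N, forall n, (N <= n)%nat -> d (p n) z < eps.

Let Hmo := is_metric_metric_on d Hm.

Lemma chain_dist_le a b : (a <= b)%nat -> d (p a) (p b) <= prefix_sum l b - prefix_sum l a.
Proof.
  induction 1 as [|m Hab IH].
  - rewrite (metric_refl Hmo _ Logic.I). lra.
  - simpl. destruct (Hg m) as [g0 [gl gd]]. pose proof (Hl m).
    assert (A := gd 0 (l m) ltac:(lra) ltac:(lra)).
    rewrite g0, gl, Rabs_left1 in A by lra.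
    pose proof (metric_triangle Hmo (p a) (p m) (p (Datatypes.S m)) Logic.I Logic.I Logic.I). lra.
Qed.

Lemma chain_tail_dist_le a : d (p a) z <= S - prefix_sum l a.
Proof.
  apply Rle_plus_epsilon. intros eps He. destruct (Hz eps He) as [N HN].
  pose proof (chain_dist_le a (max a N) ltac:(lia)). pose proof (HN (max a N) ltac:(lia)).
  pose proof (HS1 (max a N)).
  pose proof (metric_triangle Hmo (p a) (p (max a N)) z Logic.I Logic.I Logic.I). lra.
Qed.

Definition segment_index (s : R) : nat :=
  epsilon (inhabits 0%nat) (fun j => prefix_sum l j <= s < prefix_sum l (Datatypes.S j)).

Lemma segment_index_spec s : 0 <= s < S ->
  prefix_sum l (segment_index s) <= s < prefix_sum l (Datatypes.S (segment_index s)).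
Proof.
  intros Hs. apply (epsilon_spec (inhabits 0%nat) (fun j => prefix_sum l j <= s < prefix_sum l (Datatypes.S j))).
  destruct (HS2 (S - s) ltac:(lra)) as [k Hk].
  assert (Hfind : forall k, s < prefix_sum l k -> exists j, prefix_sum l j <= s < prefix_sum l (Datatypes.S j)).
  { induction k0 as [|k0 IH]; intros H; simpl in H; [lra|].
    destruct (Rlt_dec s (prefix_sum l k0)); [auto|]. exists k0. split; simpl; lra. }
  apply (Hfind k). lra.
Qed.

Lemma segment_index_mono s t : 0 <= s -> s <= t -> t < S -> (segment_index s <= segment_index t)%nat.
Proof.
  intros Hs Hst Ht. destruct (segment_index_spec s ltac:(lra)). destruct (segment_index_spec t ltac:(lra)).
  destruct (Compare_dec.le_lt_dec (segment_index s) (segment_index t)) as [|Hlt]; [assumption|].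
  pose proof (prefix_sum_mono l Hl _ _ Hlt). lra.
Qed.

Definition concat_path (s : R) : T :=
  if Rlt_dec s S then g (segment_index s) (s - prefix_sum l (segment_index s)) else z.

Lemma concat_path_dist_right s b : 0 <= s < S -> (segment_index s < b)%nat ->
  d (concat_path s) (p b) <= prefix_sum l b - s.
Proof.
  intros Hs Hb. unfold concat_path. destruct (Rlt_dec s S); [|lra].
  destruct (segment_index_spec s Hs) as [A1 A2]. simpl in A2. set (j := segment_index s) in *.
  destruct (Hg j) as [_ [gl gd]].
  assert (B := gd (s - prefix_sum l j) (l j) ltac:(lra) ltac:(lra)).
  rewrite gl, Rabs_left1 in B by lra.
  pose proof (chain_dist_le (Datatypes.S j) b Hb). simpl in *.
  pose proof (metric_triangle Hmo (g j (s - prefix_sum l j)) (p (Datatypes.S j)) (p b)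
                Logic.I Logic.I Logic.I). lra.
Qed.

Lemma concat_path_dist_left t a : 0 <= t < S -> (a <= segment_index t)%nat ->
  d (p a) (concat_path t) <= t - prefix_sum l a.
Proof.
  intros Ht Ha. unfold concat_path. destruct (Rlt_dec t S); [|lra].
  destruct (segment_index_spec t Ht) as [A1 A2]. simpl in A2. set (j := segment_index t) in *.
  destruct (Hg j) as [g0 [_ gd]].
  assert (B := gd 0 (t - prefix_sum l j) ltac:(specialize (Hl j); lra) ltac:(lra)).
  rewrite g0, Rabs_left1 in B by lra.
  pose proof (chain_dist_le a j Ha).
  pose proof (metric_triangle Hmo (p a) (p j) (g j (t - prefix_sum l j)) Logic.I Logic.I Logic.I). lra.
Qed.

Lemma concat_path_lipschitz s t : 0 <= s -> s <= t -> t <= S ->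
  d (concat_path s) (concat_path t) <= t - s.
Proof.
  intros Hs Hst Ht. destruct (Rlt_dec t S) as [HtS|HtS].
  - assert (Hj := segment_index_mono s t Hs Hst HtS).
    destruct (Nat.eq_dec (segment_index s) (segment_index t)) as [E|E].
    + unfold concat_path. destruct (Rlt_dec s S); [|lra]. destruct (Rlt_dec t S); [|lra].
      destruct (segment_index_spec s ltac:(lra)) as [A1 A2].
      destruct (segment_index_spec t ltac:(lra)) as [B1 B2].
      rewrite <- E in B1, B2 |- *. simpl in A2, B2.
      destruct (Hg (segment_index s)) as [_ [_ gd]].
      eapply Rle_trans; [apply gd; lra|]. rewrite Rabs_left1; lra.
    + pose proof (concat_path_dist_right s (segment_index t) ltac:(lra) ltac:(lia)).
      pose proof (concat_path_dist_left t (segment_index t) ltac:(lra) (le_n _)).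
      pose proof (metric_triangle Hmo (concat_path s) (p (segment_index t)) (concat_path t)
                    Logic.I Logic.I Logic.I). lra.
  - assert (E : t = S) by lra. rewrite E.
    assert (Gz : concat_path S = z) by (unfold concat_path; destruct (Rlt_dec S S); [lra|reflexivity]).
    rewrite Gz. destruct (Rlt_dec s S) as [HsS|HsS].
    + pose proof (concat_path_dist_right s (Datatypes.S (segment_index s)) ltac:(lra) (le_n _)).
      pose proof (chain_tail_dist_le (Datatypes.S (segment_index s))).
      pose proof (metric_triangle Hmo (concat_path s) (p (Datatypes.S (segment_index s))) z
                    Logic.I Logic.I Logic.I). lra.
    + replace s with S by lra. rewrite Gz, (metric_refl Hmo z Logic.I). lra.
Qed.

Lemma concat_path_start : concat_path 0 = p O.
Proof.
  pose proof Hm as [Hp [H0 _]]. apply H0. rewrite (metric_sym Hmo _ _ Logic.I Logic.I).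
  assert (HS0 : 0 <= S) by apply (HS1 O).
  destruct (Rlt_dec 0 S) as [HS|HS].
  - pose proof (concat_path_dist_left 0 O ltac:(lra) ltac:(lia)). pose proof (Hp (p O) (concat_path 0)).
    simpl in *. lra.
  - unfold concat_path. destruct (Rlt_dec 0 S); [lra|].
    pose proof (chain_tail_dist_le O). pose proof (Hp (p O) z). simpl in *. lra.
Qed.

Lemma lip_path_infinite_concat : lip_path (fun _ => True) d (p O) z S.
Proof.
  split; [apply (HS1 O)|]. exists concat_path. split; [exact concat_path_start|split; [|split]].
  - unfold concat_path. destruct (Rlt_dec S S); [lra|reflexivity].
  - auto.
  - intros s t Hs Ht. destruct (Rle_dec s t).
    + rewrite Rabs_left1 by lra. pose proof (concat_path_lipschitz s t ltac:(lra) r ltac:(lra)). lra.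
    + rewrite Rabs_right, (metric_sym Hmo _ _ Logic.I Logic.I) by lra.
      apply concat_path_lipschitz; lra.
Qed.

End InfiniteConcatenation.

Lemma lip_path_to_limit {T : Type} (d : T -> T -> R) (p : nat -> T) (z : T) (l : nat -> R) (B : R) :
  is_metric d -> (forall j, lip_path (fun _ => True) d (p j) (p (S j)) (l j)) ->
  (forall k, prefix_sum l k <= B) ->
  (forall eps, 0 < eps -> exists N, forall n, (N <= n)%nat -> d (p n) z < eps) ->
  exists L, L <= B /\ lip_path (fun _ => True) d (p O) z L.
Proof.
  intros Hm Hpath HB Hz.
  assert (inh : inhabited (R -> T)) by exact (inhabits (fun _ => z)).
  pose (g := fun j => epsilon inh (fun g => g 0 = p j /\ g (l j) = p (S j) /\
    forall s t, 0 <= s <= l j -> 0 <= t <= l j -> d (g s) (g t) <= Rabs (s - t))).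
  assert (Hl : forall j, 0 <= l j) by (intros j; apply (Hpath j)).
  assert (Hg : forall j, g j 0 = p j /\ g j (l j) = p (S j) /\
    forall s t, 0 <= s <= l j -> 0 <= t <= l j -> d (g j s) (g j t) <= Rabs (s - t)).
  { intros j. apply (epsilon_spec inh). destruct (Hpath j) as [_ [gj [g0 [gl [_ gd]]]]].
    exists gj; auto. }
  assert (Hgrow : Un_growing (prefix_sum l)) by (intros n; simpl; specialize (Hl n); lra).
  destruct (growing_cv (prefix_sum l) Hgrow) as [S HS].
  { exists B. intros x [i ->]. apply HB. }
  assert (HS2 : forall eps, 0 < eps -> exists k, S - eps < prefix_sum l k).
  { intros eps He. destruct (HS eps He) as [N HN]. exists N. specialize (HN N (le_n N)).
    unfold Rdist in HN. apply Rabs_def2 in HN. lra. }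
  exists S. split.
  - apply Rle_plus_epsilon. intros eps He. destruct (HS2 eps He) as [k Hk]. pose proof (HB k). lra.
  - exact (lip_path_infinite_concat d Hm p l g z S Hl Hg (growing_ineq _ _ Hgrow HS) HS2 Hz).
Qed.

Section DenseQuasiconvex.

Context {T : Type} (d : T -> T -> R) (Hm : is_metric d) (D : T -> Prop) (C : R) (HC : 0 <= C).
Hypothesis Hdense : forall z eps, 0 < eps -> exists x, D x /\ d x z < eps.
Hypothesis Hpath : forall x y, D x -> D y -> forall eps, 0 < eps ->
  exists L, L <= C * d x y + eps /\ lip_path (fun _ => True) d x y L.

Let Hmo := is_metric_metric_on d Hm.

(* Approach z by points p_j of D with d(p_j, z) < eta 2^-j and join consecutive ones by
   paths of length at most (2C + 1) eta 2^-j; the geometric series sums to delta. *)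
Lemma lip_path_from_dense z delta : 0 < delta ->
  exists x, D x /\ exists L, L <= delta /\ lip_path (fun _ => True) d x z L.
Proof.
  intros Hdel.
  set (K := 2 * C + 1). set (eta := delta / (2 * K)).
  assert (HK : 0 < K) by (unfold K; lra).
  assert (Heta : 0 < eta) by (unfold eta; apply Rdiv_lt_0_compat; lra).
  assert (Hq : forall j, 0 < eta * (/2)^j) by (intros j; apply Rmult_lt_0_compat; [lra|apply pow_lt; lra]).
  assert (inhT : inhabited T) by exact (inhabits z).
  pose (p := fun j => epsilon inhT (fun x => D x /\ d x z < eta * (/2)^j)).
  assert (Hpj : forall j, D (p j) /\ d (p j) z < eta * (/2)^j).
  { intros j. apply (epsilon_spec inhT (fun x => D x /\ d x z < eta * (/2)^j)). apply Hdense, Hq. }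
  assert (Hstep : forall j, exists L, L <= K * eta * (/2)^j /\
            lip_path (fun _ => True) d (p j) (p (S j)) L).
  { intros j. destruct (Hpj j) as [Dj dj]. destruct (Hpj (S j)) as [DSj dSj]. simpl in dSj.
    destruct (Hpath (p j) (p (S j)) Dj DSj (eta * (/2)^j) (Hq j)) as [L [HL PL]].
    exists L. split; [|exact PL].
    assert (Hjj : d (p j) (p (S j)) <= 2 * eta * (/2)^j).
    { pose proof (metric_triangle Hmo (p j) z (p (S j)) Logic.I Logic.I Logic.I).
      rewrite (metric_sym Hmo z) in H by exact Logic.I. pose proof (Hq j). lra. }
    pose proof (Rmult_le_compat_l C _ _ HC Hjj). unfold K. lra. }
  assert (inhR : inhabited R) by exact (inhabits 0).
  pose (l := fun j => epsilon inhR (fun L => L <= K * eta * (/2)^j /\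
                                        lip_path (fun _ => True) d (p j) (p (S j)) L)).
  assert (Hlj : forall j, l j <= K * eta * (/2)^j /\ lip_path (fun _ => True) d (p j) (p (S j)) (l j)).
  { intros j. apply (epsilon_spec inhR), Hstep. }
  exists (p O). split; [apply Hpj|].
  apply (lip_path_to_limit d p z l delta Hm (fun j => proj2 (Hlj j))).
  - intros k. pose proof (prefix_sum_geometric_le l (K * eta) (fun j => proj1 (Hlj j)) k).
    assert (E : 2 * (K * eta) = delta) by (unfold eta; field; lra).
    pose proof (pow_lt (/2) k ltac:(lra)). pose proof (Rmult_lt_0_compat K eta HK Heta). nra.
  - intros eps He. destruct (half_pow_lt (eps / eta) ltac:(apply Rdiv_lt_0_compat; lra)) as [N HN].
    exists N. intros n Hn. specialize (HN n Hn). destruct (Hpj n) as [_ Hd].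
    apply (Rmult_lt_compat_l eta) in HN; [|exact Heta].
    replace (eta * (eps / eta)) with eps in HN by (field; lra). lra.
Qed.

Lemma quasiconvex_of_dense : quasiconvex (fun _ => True) d C.
Proof.
  apply quasiconvex_of_lip_paths. intros z w _ _ eps He.
  set (delta := eps / (2 * C + 3)).
  assert (Hdel : 0 < delta) by (unfold delta; apply Rdiv_lt_0_compat; lra).
  destruct (lip_path_from_dense z delta Hdel) as [x [Dx [L1 [HL1 P1]]]].
  destruct (lip_path_from_dense w delta Hdel) as [y [Dy [L2 [HL2 P2]]]].
  destruct (Hpath x y Dx Dy delta Hdel) as [L3 [HL3 P3]].
  pose proof (lip_path_dist _ _ _ _ _ P1). pose proof (lip_path_dist _ _ _ _ _ P2).
  assert (Hxy : d x y <= d z w + 2 * delta).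
  { pose proof (metric_triangle Hmo x z y Logic.I Logic.I Logic.I).
    pose proof (metric_triangle Hmo z w y Logic.I Logic.I Logic.I).
    rewrite (metric_sym Hmo w y) in * by exact Logic.I. lra. }
  pose proof (Rmult_le_compat_l C _ _ HC Hxy).
  exists (L1 + L3 + L2). split.
  - assert (eps = (2 * C + 3) * delta) by (unfold delta; field; lra). nra.
  - apply (lip_path_concat _ _ z y w (L1 + L3) L2 Hmo); [|exact P2].
    apply (lip_path_concat _ _ z x y L1 L3 Hmo); [apply lip_path_rev|]; assumption.
Qed.

End DenseQuasiconvex.

(** * The space Y and the arc metrics theta_r *)

Definition bump (k : nat) (c : R) (i : nat) : R := if Nat.eqb i k then c else 0.

Lemma sum_f_R0_bump k c n : sum_f_R0 (bump k c) n = if Nat.leb k n then c else 0.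
Proof.
  induction n as [|n IH]; simpl.
  - unfold bump. destruct k; reflexivity.
  - rewrite IH. unfold bump. destruct (Nat.leb_spec k n); destruct (Nat.eqb_spec (S n) k);
      destruct (Nat.leb_spec k (S n)); try lia; lra.
Qed.

Lemma is_series_bump k c : is_series (bump k c) c.
Proof.
  apply is_series_Reals. intros eps He. exists k. intros n Hn.
  rewrite sum_f_R0_bump. destruct (Nat.leb_spec k n); [|lia].
  unfold Rdist. rewrite Rminus_eq_0, Rabs_R0. exact He.
Qed.

Definition bump3 (n m : nat) (A B C : R) (i : nat) : R := bump 0 A i + bump n B i + bump m C i.

Lemma is_series_bump3 n m A B C : is_series (bump3 n m A B C) (A + B + C).
Proof.
  apply (is_series_plus (fun i => bump 0 A i + bump n B i) (bump m C) (A + B) C);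
    [apply (is_series_plus (bump 0 A) (bump n B))|]; apply is_series_bump.
Qed.

Lemma theta_sym u v : theta u v = theta v u.
Proof. unfold theta. apply Series_ext. intros; apply Rabs_minus_sym. Qed.

Lemma theta_refl u : theta u u = 0.
Proof.
  unfold theta. rewrite (Series_ext _ (bump 0 0)).
  - apply is_series_unique, is_series_bump.
  - intros i. unfold bump. rewrite Rminus_eq_0, Rabs_R0. destruct (_ =? _); reflexivity.
Qed.

Definition tent (n : nat) (t : R) : nat -> R :=
  fun i => if Nat.eqb i 0 then / 2 ^ (n + 1) * t + (1/2 - / 2 ^ n)
           else if Nat.eqb i n then / 2 ^ (n + 1) * alpha t else 0.

Lemma Yset_tent y :
  Yset y <-> (exists n, (1 <= n)%nat /\ exists t, 0 <= t <= 1 /\ y = tent n t) \/ y = x_inf.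
Proof. reflexivity. Qed.

Lemma alpha_bounds t : 0 <= t <= 1 -> 0 <= alpha t /\ alpha t <= t /\ alpha t <= 1 - t.
Proof. intros Ht. unfold alpha. destruct (Rle_dec t (1/2)); lra. Qed.

Lemma alpha_lipschitz s t : Rabs (alpha s - alpha t) <= Rabs (s - t).
Proof.
  unfold alpha. destruct (Rle_dec s (1/2)); destruct (Rle_dec t (1/2));
    unfold Rabs; repeat destruct Rcase_abs; lra.
Qed.

Lemma inv_pow2_S k : / 2 ^ (k + 1) = / 2 ^ k * / 2.
Proof. rewrite pow_add, pow_1, Rinv_mult. reflexivity. Qed.

Lemma inv_pow2_pos k : 0 < / 2 ^ k.
Proof. apply Rinv_0_lt_compat, pow_lt; lra. Qed.

Lemma inv_pow2_le a b : (a <= b)%nat -> / 2 ^ b <= / 2 ^ a.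
Proof. intros H. apply Rinv_le_contravar; [apply pow_lt; lra|apply Rle_pow; lra || lia]. Qed.

Ltac solve_abs := unfold Rabs; repeat destruct Rcase_abs; nra.

Lemma tent_dominated_lt n m t t' : (1 <= n)%nat -> (n < m)%nat -> 0 <= t <= 1 -> 0 <= t' <= 1 ->
  let A := Rabs (tent n t 0 - tent m t' 0) in
  let B := / 2 ^ (n + 1) * alpha t in let C := / 2 ^ (m + 1) * alpha t' in
  (forall i, Rabs (tent n t i - tent m t' i) <= bump3 n m A B C i) /\
  0 <= B /\ 0 <= C /\ A + B + C <= 2 * A.
Proof.
  intros Hn Hm Ht Ht' A B C.
  destruct (alpha_bounds t Ht) as [a1 [a2 a3]]. destruct (alpha_bounds t' Ht') as [b1 [b2 b3]].
  pose proof (inv_pow2_pos (n + 1)). pose proof (inv_pow2_pos (m + 1)).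
  assert (HB : 0 <= B) by (unfold B; nra). assert (HC : 0 <= C) by (unfold C; nra).
  assert (E1 : / 2 ^ n = 2 * / 2 ^ (n + 1)) by (rewrite inv_pow2_S; field; apply pow_nonzero; lra).
  assert (E2 : / 2 ^ m <= / 2 ^ (n + 1)) by (apply inv_pow2_le; lia).
  assert (Hd : tent m t' 0 - tent n t 0 >= B + C) by (unfold tent, B, C; simpl; nra).
  split; [|split; [exact HB|split; [exact HC|]]].
  - intros i. unfold bump3, bump, tent.
    destruct (Nat.eqb_spec i 0); destruct (Nat.eqb_spec i n); destruct (Nat.eqb_spec i m); try lia;
      destruct (Nat.eqb_spec m 0); destruct (Nat.eqb_spec n 0); try lia;
      unfold A, B, C, tent; simpl; solve_abs.
  - unfold A. rewrite Rabs_minus_sym, Rabs_right by lra. lra.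
Qed.

Lemma tent_dominated_eq n t t' : (1 <= n)%nat -> 0 <= t <= 1 -> 0 <= t' <= 1 ->
  let A := Rabs (tent n t 0 - tent n t' 0) in
  let B := / 2 ^ (n + 1) * Rabs (alpha t - alpha t') in
  (forall i, Rabs (tent n t i - tent n t' i) <= bump3 n n A B 0 i) /\ 0 <= B /\ A + B + 0 <= 2 * A.
Proof.
  intros Hn Ht Ht' A B.
  pose proof (inv_pow2_pos (n + 1)). pose proof (Rabs_pos (alpha t - alpha t')).
  assert (HB : 0 <= B) by (unfold B; nra).
  assert (HA : A = / 2 ^ (n + 1) * Rabs (t - t')).
  { unfold A, tent; simpl.
    replace (/ 2 ^ (n + 1) * t + (1 / 2 - / 2 ^ n) - (/ 2 ^ (n + 1) * t' + (1 / 2 - / 2 ^ n)))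
      with (/ 2 ^ (n + 1) * (t - t')) by ring.
    rewrite Rabs_mult, Rabs_right by lra. reflexivity. }
  split; [|split; [exact HB|]].
  - intros i. unfold bump3, bump, tent.
    destruct (Nat.eqb_spec i 0); destruct (Nat.eqb_spec i n); try lia;
      destruct (Nat.eqb_spec n 0); try lia; unfold A, B, tent; simpl; solve_abs.
  - pose proof (alpha_lipschitz t t'). unfold B. nra.
Qed.

Lemma tent_x_inf_dominated n t : (1 <= n)%nat -> 0 <= t <= 1 ->
  let A := Rabs (tent n t 0 - x_inf 0) in
  let B := / 2 ^ (n + 1) * alpha t in
  (forall i, Rabs (tent n t i - x_inf i) <= bump3 n n A B 0 i) /\ 0 <= B /\ A + B + 0 <= 2 * A.
Proof.
  intros Hn Ht A B.
  destruct (alpha_bounds t Ht) as [a1 [a2 a3]]. pose proof (inv_pow2_pos (n + 1)).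
  assert (HB : 0 <= B) by (unfold B; nra).
  assert (E1 : / 2 ^ n = 2 * / 2 ^ (n + 1)) by (rewrite inv_pow2_S; field; apply pow_nonzero; lra).
  assert (Hd : x_inf 0 - tent n t 0 >= B) by (unfold tent, B, x_inf; simpl; nra).
  split; [|split; [exact HB|]].
  - intros i. unfold bump3, bump, tent, x_inf.
    destruct (Nat.eqb_spec i 0); destruct (Nat.eqb_spec i n); try lia;
      destruct (Nat.eqb_spec n 0); try lia; unfold A, B, tent, x_inf; simpl; solve_abs.
  - unfold A. rewrite Rabs_minus_sym, Rabs_right by lra. lra.
Qed.

(* Along a tent the e_{n+1}-coordinate moves by at most the e_1-coordinate, and the tents
   sit over disjoint e_1-intervals: so theta on Y is at most twice the e_1-distance. *)
Lemma Yset_dominated y z : Yset y -> Yset z -> exists n m B C, 0 <= B /\ 0 <= C /\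
  (forall i, Rabs (y i - z i) <= bump3 n m (Rabs (y 0%nat - z 0%nat)) B C i) /\
  Rabs (y 0%nat - z 0%nat) + B + C <= 2 * Rabs (y 0%nat - z 0%nat).
Proof.
  assert (Hswap : forall a b n m B C, 0 <= B /\ 0 <= C /\
            (forall i, Rabs (b i - a i) <= bump3 n m (Rabs (b 0%nat - a 0%nat)) B C i) /\
            Rabs (b 0%nat - a 0%nat) + B + C <= 2 * Rabs (b 0%nat - a 0%nat) ->
            exists n m B C, 0 <= B /\ 0 <= C /\
            (forall i, Rabs (a i - b i) <= bump3 n m (Rabs (a 0%nat - b 0%nat)) B C i) /\
            Rabs (a 0%nat - b 0%nat) + B + C <= 2 * Rabs (a 0%nat - b 0%nat)).
  { intros a b n m B C [HB [HC [Hi Hs]]]. exists n, m, B, C.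
    rewrite (Rabs_minus_sym (a 0%nat)). split; [|split; [|split]]; auto.
    intros i. rewrite Rabs_minus_sym. apply Hi. }
  intros Hy Hz. apply Yset_tent in Hy. apply Yset_tent in Hz.
  destruct Hy as [[n [Hn [t [Ht ->]]]]| ->]; destruct Hz as [[m [Hm [t' [Ht' ->]]]]| ->].
  - destruct (Nat.lt_total n m) as [Hlt|[<-|Hgt]].
    + destruct (tent_dominated_lt n m t t' Hn Hlt Ht Ht') as [H1 [H2 [H3 H4]]].
      exists n, m, (/ 2 ^ (n + 1) * alpha t), (/ 2 ^ (m + 1) * alpha t'). auto.
    + destruct (tent_dominated_eq n t t' Hn Ht Ht') as [H1 [H2 H4]].
      exists n, n, (/ 2 ^ (n + 1) * Rabs (alpha t - alpha t')), 0. auto with real.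
    + destruct (tent_dominated_lt m n t' t Hm Hgt Ht' Ht) as [H1 [H2 [H3 H4]]].
      eapply Hswap. eauto.
  - destruct (tent_x_inf_dominated n t Hn Ht) as [H1 [H2 H4]].
    exists n, n, (/ 2 ^ (n + 1) * alpha t), 0. auto with real.
  - destruct (tent_x_inf_dominated m t' Hm Ht') as [H1 [H2 H4]].
    eapply Hswap. split; [exact H2|split; [apply Rle_refl|eauto]].
  - exists 1%nat, 1%nat, 0, 0. rewrite Rminus_eq_0, Rabs_R0. split; [lra|split; [lra|split; [|lra]]].
    intros i. rewrite Rminus_eq_0, Rabs_R0. unfold bump3, bump. destruct (_ =? _); destruct (_ =? _); lra.
Qed.

Lemma bump3_dominates_ex_series (u : nat -> R) n m A B C :
  (forall i, Rabs (u i) <= bump3 n m A B C i) -> ex_series (fun i => Rabs (u i)).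
Proof.
  intros Hu. apply (@ex_series_le R_AbsRing R_CompleteNormedModule _ (bump3 n m A B C)).
  - intros i. unfold norm; simpl. unfold abs; simpl. rewrite Rabs_Rabsolu. apply Hu.
  - eexists. apply is_series_bump3.
Qed.

Lemma Yset_ex_series y z : Yset y -> Yset z -> ex_series (fun i => Rabs (y i - z i)).
Proof.
  intros Hy Hz. destruct (Yset_dominated y z Hy Hz) as [n [m [B [C [_ [_ [Hp _]]]]]]].
  exact (bump3_dominates_ex_series (fun i => y i - z i) n m _ B C Hp).
Qed.

Lemma theta_le_first_coord y z : Yset y -> Yset z -> theta y z <= 2 * Rabs (y 0%nat - z 0%nat).
Proof.
  intros Hy Hz. destruct (Yset_dominated y z Hy Hz) as [n [m [B [C [HB [HC [Hp Hl]]]]]]].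
  unfold theta. eapply Rle_trans; [apply (Series_le _ (bump3 n m (Rabs (y 0%nat - z 0%nat)) B C))|].
  - intros i. split; [apply Rabs_pos|apply Hp].
  - eexists. apply is_series_bump3.
  - rewrite (is_series_unique _ _ (is_series_bump3 _ _ _ _ _)). exact Hl.
Qed.

Lemma coord_le_theta y z : Yset y -> Yset z -> forall i, Rabs (y i - z i) <= theta y z.
Proof.
  intros Hy Hz i. unfold theta.
  rewrite <- (is_series_unique _ _ (is_series_bump i (Rabs (y i - z i)))).
  apply Series_le; [|apply Yset_ex_series; auto].
  intros k. unfold bump. destruct (Nat.eqb_spec k i) as [->|_]; split; (lra || apply Rabs_pos).
Qed.

Lemma theta_nonneg y z : Yset y -> Yset z -> 0 <= theta y z.
Proof. intros Hy Hz. eapply Rle_trans; [apply Rabs_pos|apply (coord_le_theta y z Hy Hz 0%nat)]. Qed.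

Lemma theta_triangle x y z : Yset x -> Yset y -> Yset z -> theta x z <= theta x y + theta y z.
Proof.
  intros Hx Hy Hz. unfold theta. rewrite <- Series_plus by (apply Yset_ex_series; auto).
  apply Series_le.
  - intros i. split; [apply Rabs_pos|].
    replace (x i - z i) with ((x i - y i) + (y i - z i)) by ring. apply Rabs_triang.
  - apply (ex_series_plus (fun i => Rabs (x i - y i)) (fun i => Rabs (y i - z i)));
      apply Yset_ex_series; auto.
Qed.

Lemma theta_eq_0 y z : Yset y -> Yset z -> theta y z = 0 -> y = z.
Proof.
  intros Hy Hz H. apply functional_extensionality. intros i.
  pose proof (coord_le_theta y z Hy Hz i) as Hi. rewrite H in Hi.
  pose proof (Rabs_pos (y i - z i)).
  assert (E : Rabs (y i - z i) = 0) by lra. apply Rabs_eq_0 in E. lra.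
Qed.

Lemma lipschitz_continuity (f : R -> R) (K : R) : 0 < K ->
  (forall x y, Rabs (f x - f y) <= K * Rabs (x - y)) -> continuity f.
Proof.
  intros HK Hf x eps He. exists (eps / K). split; [apply Rdiv_lt_0_compat; auto|].
  intros y [_ Hy]. simpl in *. unfold Rdist in *.
  eapply Rle_lt_trans; [apply Hf|]. apply (Rmult_lt_compat_l K) in Hy; [|exact HK].
  replace (K * (eps / K)) with eps in Hy by (field; lra). exact Hy.
Qed.

Record interval_metric (r : R) (d : R -> R -> R) : Prop := {
  interval_metric_le : forall s t, 0 <= s <= r -> 0 <= t <= r -> d s t <= Rabs (s - t);
  interval_metric_ge : forall s t, 0 <= s <= r -> 0 <= t <= r -> Rabs (s - t) <= 2 * d s t;
  interval_metric_sym : forall s t, d s t = d t s;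
  interval_metric_refl : forall s, d s s = 0;
  interval_metric_triangle : forall s t u, 0 <= s <= r -> 0 <= t <= r -> 0 <= u <= r ->
    d s u <= d s t + d t u }.
Arguments interval_metric_le {r d}.
Arguments interval_metric_ge {r d}.
Arguments interval_metric_sym {r d}.
Arguments interval_metric_refl {r d}.
Arguments interval_metric_triangle {r d}.

Lemma interval_metric_nonneg r d : interval_metric r d ->
  forall s t, 0 <= s <= r -> 0 <= t <= r -> 0 <= d s t.
Proof. intros Hd s t Hs Ht. pose proof (interval_metric_ge Hd s t Hs Ht). pose proof (Rabs_pos (s - t)). lra. Qed.

Section ArcLength.

Context (gamma : R -> nat -> R) (Hg : gamma_hyp gamma).

Lemma gamma_in_Y t : 0 <= t <= 1 -> Yset (gamma t).
Proof. apply (proj1 Hg). Qed.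

Lemma theta_gamma_le s t : 0 <= s <= 1 -> 0 <= t <= 1 -> theta (gamma s) (gamma t) <= Rabs (s - t).
Proof.
  assert (K : forall s t, 0 <= s -> s <= t -> t <= 1 -> theta (gamma s) (gamma t) <= t - s).
  { intros s0 t0 Hs Hst Ht. destruct Hg as [_ [_ [_ [_ [_ Hl]]]]].
    destruct (Hl s0 t0 Hs Hst Ht) as [Hle _].
    specialize (Hle (fun i => if Nat.eqb i 0 then s0 else t0) 1%nat).
    simpl in Hle. rewrite Rplus_0_l in Hle. apply Hle.
    split; [reflexivity|split; [reflexivity|]]. intros i Hi. destruct i; simpl; [lra|lia]. }
  intros Hs Ht. destruct (Rle_dec s t).
  - rewrite Rabs_left1 by lra. pose proof (K s t ltac:(lra) r ltac:(lra)). lra.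
  - rewrite Rabs_right, theta_sym by lra. apply K; lra.
Qed.

Definition abscissa (t : R) : R := 2 * gamma t 0%nat.

Lemma abscissa_lipschitz s t : 0 <= s <= 1 -> 0 <= t <= 1 ->
  Rabs (abscissa s - abscissa t) <= 2 * theta (gamma s) (gamma t).
Proof.
  intros Hs Ht. unfold abscissa.
  replace (2 * gamma s 0%nat - 2 * gamma t 0%nat) with (2 * (gamma s 0%nat - gamma t 0%nat)) by ring.
  rewrite Rabs_mult, Rabs_right by lra.
  pose proof (coord_le_theta _ _ (gamma_in_Y s Hs) (gamma_in_Y t Ht) 0%nat). lra.
Qed.

Lemma theta_gamma_le_abscissa s t : 0 <= s <= 1 -> 0 <= t <= 1 ->
  theta (gamma s) (gamma t) <= Rabs (abscissa s - abscissa t).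
Proof.
  intros Hs Ht. unfold abscissa.
  replace (2 * gamma s 0%nat - 2 * gamma t 0%nat) with (2 * (gamma s 0%nat - gamma t 0%nat)) by ring.
  rewrite Rabs_mult, Rabs_right by lra. apply theta_le_first_coord; apply gamma_in_Y; auto.
Qed.

Lemma abscissa_0 : abscissa 0 = 0.
Proof. unfold abscissa. destruct Hg as [_ [_ [_ [H _]]]]. rewrite H. lra. Qed.

Lemma abscissa_1 : abscissa 1 = 1.
Proof. unfold abscissa. destruct Hg as [_ [_ [_ [_ [H _]]]]]. rewrite H. unfold x_inf. simpl. lra. Qed.

Lemma abscissa_inj s t : 0 <= s <= 1 -> 0 <= t <= 1 -> abscissa s = abscissa t -> s = t.
Proof.
  intros Hs Ht E. destruct Hg as [_ [_ [Hi _]]]. apply Hi; auto.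
  apply theta_eq_0; try apply gamma_in_Y; auto.
  pose proof (theta_gamma_le_abscissa s t Hs Ht) as H. rewrite E, Rminus_eq_0, Rabs_R0 in H.
  pose proof (theta_nonneg _ _ (gamma_in_Y s Hs) (gamma_in_Y t Ht)). lra.
Qed.

Definition clamp01 (x : R) : R := Rmax 0 (Rmin 1 x).

Lemma clamp01_range x : 0 <= clamp01 x <= 1.
Proof. unfold clamp01, Rmax, Rmin. repeat destruct Rle_dec; lra. Qed.

Lemma clamp01_id x : 0 <= x <= 1 -> clamp01 x = x.
Proof. intros H. unfold clamp01, Rmax, Rmin. repeat destruct Rle_dec; lra. Qed.

Lemma abscissa_clamp_continuous : continuity (fun x => abscissa (clamp01 x)).
Proof.
  apply (lipschitz_continuity _ 4); [lra|]. intros x y.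
  pose proof (abscissa_lipschitz _ _ (clamp01_range x) (clamp01_range y)).
  pose proof (theta_gamma_le _ _ (clamp01_range x) (clamp01_range y)).
  assert (Rabs (clamp01 x - clamp01 y) <= Rabs (x - y)).
  { unfold clamp01, Rmax, Rmin. repeat destruct Rle_dec; unfold Rabs; repeat destruct Rcase_abs; lra. }
  pose proof (Rabs_pos (x - y)). lra.
Qed.

Lemma abscissa_ivt a b y : 0 <= a <= b -> b <= 1 -> Rmin (abscissa a) (abscissa b) <= y <= Rmax (abscissa a) (abscissa b) ->
  exists c, a <= c <= b /\ abscissa c = y.
Proof.
  intros Ha Hb Hy. rewrite <- (clamp01_id a), <- (clamp01_id b) in Hy by lra.
  destruct (IVT_gen _ a b y abscissa_clamp_continuous Hy) as [c [Hc Ec]].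
  rewrite Rmin_left, Rmax_right in Hc by lra. rewrite clamp01_id in Ec by lra. eauto.
Qed.

Lemma abscissa_increasing s t : 0 <= s -> s < t -> t <= 1 -> abscissa s < abscissa t.
Proof.
  assert (Hpos : forall t, 0 < t <= 1 -> 0 < abscissa t).
  { intros u Hu. destruct (Rlt_dec 0 (abscissa u)) as [|Hn]; [assumption|exfalso].
    destruct (Req_dec u 1) as [->|Hu1]; [rewrite abscissa_1 in Hn; lra|].
    destruct (abscissa_ivt u 1 0) as [c [Hc Ec]]; [lra|lra|rewrite abscissa_1; unfold Rmin, Rmax; repeat destruct Rle_dec; lra|].
    rewrite <- abscissa_0 in Ec. apply abscissa_inj in Ec; lra. }
  intros Hs Hst Ht. destruct (Req_dec s 0) as [->|Hs0]; [rewrite abscissa_0; apply Hpos; lra|].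
  destruct (Rlt_dec (abscissa s) (abscissa t)) as [|Hn]; [assumption|exfalso].
  pose proof (Hpos t ltac:(lra)).
  destruct (abscissa_ivt 0 s (abscissa t)) as [c [Hc Ec]]; [lra|lra|rewrite abscissa_0; unfold Rmin, Rmax; repeat destruct Rle_dec; lra|].
  apply abscissa_inj in Ec; lra.
Qed.

(* Each inscribed polygon of gamma on [s, t] has length at most abscissa t - abscissa s,
   so the arc-length hypothesis forces t - s <= abscissa t - abscissa s; with the values
   at 0 and 1 this pins the abscissa down to the identity. *)
Lemma abscissa_id t : 0 <= t <= 1 -> abscissa t = t.
Proof.
  assert (K : forall s t, 0 <= s -> s <= t -> t <= 1 -> t - s <= abscissa t - abscissa s).
  { intros s0 t0 Hs Hst Ht. destruct Hg as [_ [_ [_ [_ [_ Hl]]]]].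
    destruct (Hl s0 t0 Hs Hst Ht) as [_ Happ].
    apply Rle_plus_epsilon. intros eps He. destruct (Happ eps He) as [tt [n [Hp Hlt]]].
    pose proof (is_partition_bounds _ _ _ _ Hp) as Hb.
    destruct Hp as [H0 [Hn Hm]].
    assert (psum theta gamma tt n <= abscissa (tt n) - abscissa (tt 0%nat)).
    { apply psum_le_telescope. intros i Hi.
      pose proof (Hb i ltac:(lia)). pose proof (Hb (S i) ltac:(lia)). pose proof (Hm i Hi).
      eapply Rle_trans; [apply theta_gamma_le_abscissa; lra|].
      destruct (Req_dec (tt i) (tt (S i))) as [E|E]; [rewrite E, Rminus_eq_0, Rabs_R0; lra|].
      pose proof (abscissa_increasing (tt i) (tt (S i)) ltac:(lra) ltac:(lra) ltac:(lra)).
      rewrite Rabs_left1 by lra. lra. }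
    rewrite Hn, H0 in H. lra. }
  intros Ht. pose proof (K 0 t ltac:(lra) ltac:(lra) ltac:(lra)). pose proof (K t 1 ltac:(lra) ltac:(lra) ltac:(lra)).
  rewrite abscissa_0 in H. rewrite abscissa_1 in H0. lra.
Qed.

Lemma abs_le_2_theta_gamma s t : 0 <= s <= 1 -> 0 <= t <= 1 -> Rabs (s - t) <= 2 * theta (gamma s) (gamma t).
Proof.
  intros Hs Ht. pose proof (abscissa_lipschitz s t Hs Ht) as H. rewrite !abscissa_id in H; auto.
Qed.

Lemma theta_r_interval_metric (r : R) : 0 < r -> interval_metric r (theta_r gamma r).
Proof.
  intros Hr.
  assert (Sc : forall s, 0 <= s <= r -> 0 <= s / r <= 1).
  { intros s Hs. split; [apply Rdiv_le_0_compat; lra|].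
    apply (Rmult_le_reg_r r); [exact Hr|]. field_simplify; lra. }
  assert (Hscale : forall s t, Rabs (s - t) = r * Rabs (s / r - t / r)).
  { intros s t. replace (s - t) with (r * (s / r - t / r)) by (field; lra).
    rewrite Rabs_mult, (Rabs_right r) by lra. reflexivity. }
  unfold theta_r. split.
  - intros s t Hs Ht. pose proof (theta_gamma_le _ _ (Sc s Hs) (Sc t Ht)). rewrite Hscale.
    apply Rmult_le_compat_l; lra.
  - intros s t Hs Ht. pose proof (abs_le_2_theta_gamma _ _ (Sc s Hs) (Sc t Ht)). rewrite Hscale. nra.
  - intros s t. rewrite theta_sym. reflexivity.
  - intros s. rewrite theta_refl. ring.
  - intros s t u Hs Ht Hu.
    pose proof (theta_triangle _ _ _ (gamma_in_Y _ (Sc s Hs)) (gamma_in_Y _ (Sc t Ht)) (gamma_in_Y _ (Sc u Hu))).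
    nra.
Qed.

End ArcLength.

(** * The spaces P_k *)

Definition hair_root (q : nat -> nat -> nat -> R) (m : nat) (y : nat -> R) : Prop :=
  exists n, y = q m n.

Definition set_coord (y : nat -> R) (k : nat) (h : R) : nat -> R :=
  fun i => if Nat.eqb i k then h else y i.

Lemma set_coord_at y k h : set_coord y k h k = h.
Proof. unfold set_coord. rewrite Nat.eqb_refl. reflexivity. Qed.

Section Levels.

Context (gamma : R -> nat -> R) (q : nat -> nat -> nat -> R).

(* A point x of P_{m+1} has its foot [base m x] in P_m; if the foot is a root q_n, the
   coordinate x (S m) is the position on the hair over q_n and [height m x] is its
   hair distance d_n(x (S m), 0) to the foot. *)
Definition base (m : nat) (x : nat -> R) : nat -> R := trunc (S m) x.
Definition hair_dist (m n : nat) : R -> R -> R := theta_r gamma (rad m n).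
Definition same_hair (m : nat) (x y : nat -> R) : Prop :=
  hair_root q m (base m x) /\ base m x = base m y.
Definition height (m : nat) (x : nat -> R) : R :=
  if excluded_middle_informative (hair_root q m (base m x))
  then hair_dist m (idx q m x) (x (S m)) 0 else 0.

Lemma Pk_0 x : Pk gamma q 0 x <-> 0 <= x 0%nat <= 1 /\ forall i, (0 < i)%nat -> x i = 0.
Proof. reflexivity. Qed.

Lemma Pk_S m x : Pk gamma q (S m) x <-> (forall i, (S m < i)%nat -> x i = 0) /\
  ((Pk gamma q m (base m x) /\ ~ hair_root q m (base m x) /\ x (S m) = 0) \/
   (exists n, base m x = q m n /\ 0 <= x (S m) <= rad m n)).
Proof.
  unfold Pk. simpl. destruct (level gamma q m) as [[P0 r0] L0]. reflexivity.
Qed.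

Lemma rhok_0 x y : rhok gamma q 0 x y = theta_r gamma 1 (x 0%nat) (y 0%nat).
Proof. reflexivity. Qed.

Lemma hair_dist_sym m n s t : hair_dist m n s t = hair_dist m n t s.
Proof. unfold hair_dist, theta_r. rewrite theta_sym. reflexivity. Qed.

Lemma rhok_S m x y : rhok gamma q (S m) x y =
  if excluded_middle_informative (same_hair m x y) then hair_dist m (idx q m x) (x (S m)) (y (S m))
  else height m x + rhok gamma q m (base m x) (base m y) + height m y.
Proof.
  unfold rhok at 1. simpl. destruct (level gamma q m) as [[P0 r0] L0] eqn:E. simpl.
  assert (Er : r0 = rhok gamma q m) by (unfold rhok; rewrite E; reflexivity).
  subst r0. unfold height, same_hair, base, hair_dist, hair_root.
  destruct (excluded_middle_informative _); [reflexivity|].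
  destruct (excluded_middle_informative (exists n, trunc (S m) y = q m n)); [|reflexivity].
  unfold theta_r. rewrite (theta_sym (gamma (0 / _))). reflexivity.
Qed.

Lemma Pk_support m x : Pk gamma q m x -> forall i, (m < i)%nat -> x i = 0.
Proof. destruct m; [intros H; rewrite Pk_0 in H|intros H; rewrite Pk_S in H]; apply H. Qed.

Lemma base_id m x : (forall i, (m < i)%nat -> x i = 0) -> base m x = x.
Proof.
  intros H. apply functional_extensionality. intros i. unfold base, trunc.
  destruct (Nat.ltb_spec i (S m)); [reflexivity|]. symmetry; apply H; lia.
Qed.

Lemma base_base m x : base m (base m x) = base m x.
Proof. apply base_id. intros i Hi. unfold base, trunc. destruct (Nat.ltb_spec i (S m)); [lia|reflexivity]. Qed.

Lemma base_at m x : base m x (S m) = 0.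
Proof. unfold base, trunc. destruct (Nat.ltb_spec (S m) (S m)); [lia|reflexivity]. Qed.

Lemma set_coord_base m x : (forall i, (S m < i)%nat -> x i = 0) -> x = set_coord (base m x) (S m) (x (S m)).
Proof.
  intros H. apply functional_extensionality. intros i. unfold set_coord, base, trunc.
  destruct (Nat.eqb_spec i (S m)) as [->|]; [reflexivity|].
  destruct (Nat.ltb_spec i (S m)); [reflexivity|]. apply H; lia.
Qed.

Lemma base_set_coord m y h : (forall i, (m < i)%nat -> y i = 0) -> base m (set_coord y (S m) h) = y.
Proof.
  intros H. apply functional_extensionality. intros i. unfold set_coord, base, trunc.
  destruct (Nat.ltb_spec i (S m)).
  - destruct (Nat.eqb_spec i (S m)); [lia|reflexivity].
  - symmetry. apply H. lia.
Qed.

Lemma idx_base_eq m x y : base m x = base m y -> idx q m x = idx q m y.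
Proof. unfold idx, base. intros ->. reflexivity. Qed.

Lemma same_hair_sym m x y : same_hair m x y -> same_hair m y x.
Proof. intros [H1 H2]. split; [rewrite <- H2|]; auto. Qed.

Lemma same_hair_trans m x y z : same_hair m x y -> same_hair m y z -> same_hair m x z.
Proof. intros [H1 H2] [H3 H4]. split; [exact H1|congruence]. Qed.

Hypothesis Hq : choices_hyp gamma q.

Lemma q_in m n : Pk gamma q m (q m n).
Proof. apply (Hq m). Qed.

Lemma q_inj m n n' : q m n = q m n' -> n = n'.
Proof. apply (Hq m). Qed.

Lemma idx_eq m x n : base m x = q m n -> idx q m x = n.
Proof.
  intros H. apply (q_inj m). rewrite <- H. symmetry.
  apply (epsilon_spec (inhabits 0%nat) (fun n => trunc (S m) x = q m n)). exists n; exact H.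
Qed.

Lemma Pk_S_base m x : Pk gamma q (S m) x -> Pk gamma q m (base m x) /\
  (hair_root q m (base m x) -> 0 <= x (S m) <= rad m (idx q m x)) /\
  (~ hair_root q m (base m x) -> x (S m) = 0).
Proof.
  intros H. rewrite Pk_S in H. destruct H as [_ [[H1 [H2 H3]]|[n [H1 H2]]]].
  - split; [exact H1|split; [intros; contradiction|auto]].
  - rewrite (idx_eq m x n H1), H1. split; [apply q_in|split; [auto|]].
    intros Hn; exfalso; apply Hn; exists n; reflexivity.
Qed.

Lemma height_root m x : hair_root q m (base m x) -> height m x = hair_dist m (idx q m x) (x (S m)) 0.
Proof. intros H. unfold height. destruct (excluded_middle_informative _); [reflexivity|contradiction]. Qed.

Lemma height_not_root m x : ~ hair_root q m (base m x) -> height m x = 0.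
Proof. intros H. unfold height. destruct (excluded_middle_informative _); [contradiction|reflexivity]. Qed.

Hypothesis Hg : gamma_hyp gamma.

Lemma hair_dist_interval_metric m n : interval_metric (rad m n) (hair_dist m n).
Proof. apply theta_r_interval_metric; [exact Hg|]. unfold rad. apply inv_pow2_pos. Qed.

Lemma rad_pos m n : 0 < rad m n.
Proof. apply inv_pow2_pos. Qed.

Lemma height_nonneg m x : Pk gamma q (S m) x -> 0 <= height m x.
Proof.
  intros Hx. destruct (Pk_S_base m x Hx) as [_ [HQ _]]. unfold height.
  destruct (excluded_middle_informative _) as [HR|]; [|lra].
  apply (interval_metric_nonneg _ _ (hair_dist_interval_metric m _)); [auto|].
  pose proof (rad_pos m (idx q m x)); lra.
Qed.

End Levels.

Section LevelMetric.

Context (gamma : R -> nat -> R) (q : nat -> nat -> nat -> R).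
Context (Hg : gamma_hyp gamma) (Hq : choices_hyp gamma q).

Notation P := (Pk gamma q).
Notation rho := (rhok gamma q).
Notation height := (height gamma q).
Notation hair_dist := (hair_dist gamma).

Lemma same_hair_range m x y : P (S m) x -> P (S m) y -> same_hair q m x y ->
  idx q m y = idx q m x /\ 0 <= x (S m) <= rad m (idx q m x) /\ 0 <= y (S m) <= rad m (idx q m x).
Proof.
  intros Hx Hy [HR E].
  assert (Ei := idx_base_eq q m y x (eq_sym E)).
  destruct (Pk_S_base gamma q Hq m x Hx) as [_ [Rx _]]. destruct (Pk_S_base gamma q Hq m y Hy) as [_ [Ry _]].
  specialize (Rx HR). rewrite E in HR. specialize (Ry HR). rewrite Ei in Ry.
  split; [exact Ei|split; [exact Rx|exact Ry]].
Qed.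

Lemma rhok_S_off_hair m x y : ~ same_hair q m x y ->
  rho (S m) x y = height m x + rho m (base m x) (base m y) + height m y.
Proof. intros N. rewrite rhok_S. destruct (excluded_middle_informative _); [contradiction|reflexivity]. Qed.

Lemma rhok_nonneg m x y : P m x -> P m y -> 0 <= rho m x y.
Proof.
  revert x y. induction m as [|m IH]; intros x y Hx Hy.
  - rewrite Pk_0 in Hx, Hy. rewrite rhok_0.
    apply (interval_metric_nonneg _ _ (theta_r_interval_metric gamma Hg 1 ltac:(lra))); apply Hx || apply Hy.
  - rewrite rhok_S. destruct (excluded_middle_informative (same_hair q m x y)) as [Sxy|Sxy].
    + destruct (same_hair_range m x y Hx Hy Sxy) as [_ [Rx Ry]].
      exact (interval_metric_nonneg _ _ (hair_dist_interval_metric gamma Hg m _) _ _ Rx Ry).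
    + pose proof (height_nonneg gamma q Hq Hg m x Hx). pose proof (height_nonneg gamma q Hq Hg m y Hy).
      pose proof (IH _ _ (proj1 (Pk_S_base gamma q Hq m x Hx)) (proj1 (Pk_S_base gamma q Hq m y Hy))). lra.
Qed.

Lemma rhok_refl m x : P m x -> rho m x x = 0.
Proof.
  revert x. induction m as [|m IH]; intros x Hx.
  - rewrite rhok_0. apply (interval_metric_refl (theta_r_interval_metric gamma Hg 1 ltac:(lra))).
  - rewrite rhok_S. destruct (excluded_middle_informative (same_hair q m x x)) as [Sxx|Sxx].
    + apply (interval_metric_refl (hair_dist_interval_metric gamma Hg m _)).
    + assert (~ hair_root q m (base m x)) by (intro H; apply Sxx; split; auto).
      rewrite height_not_root, IH by (auto; apply (Pk_S_base gamma q Hq m x Hx)). lra.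
Qed.

Lemma rhok_sym m x y : P m x -> P m y -> rho m x y = rho m y x.
Proof.
  revert x y. induction m as [|m IH]; intros x y Hx Hy.
  - rewrite !rhok_0. apply (interval_metric_sym (theta_r_interval_metric gamma Hg 1 ltac:(lra))).
  - rewrite !rhok_S.
    destruct (excluded_middle_informative (same_hair q m x y)) as [Sxy|Sxy];
      destruct (excluded_middle_informative (same_hair q m y x)) as [Syx|Syx].
    + rewrite (idx_base_eq q m x y (proj2 Sxy)). apply hair_dist_sym.
    + exfalso; apply Syx, same_hair_sym; auto.
    + exfalso; apply Sxy, same_hair_sym; auto.
    + rewrite IH by (apply Pk_S_base; auto). lra.
Qed.

Lemma rhok_S_le_base m x y : P (S m) x -> P (S m) y ->
  rho (S m) x y <= height m x + rho m (base m x) (base m y) + height m y.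
Proof.
  intros Hx Hy. rewrite rhok_S. destruct (excluded_middle_informative (same_hair q m x y)) as [Sxy|]; [|lra].
  destruct (same_hair_range m x y Hx Hy Sxy) as [Ei [Rx Ry]].
  assert (R0 : 0 <= 0 <= rad m (idx q m x)) by (pose proof (rad_pos m (idx q m x)); lra).
  destruct Sxy as [HR E]. pose proof (hair_dist_interval_metric gamma Hg m (idx q m x)) as Hd.
  rewrite (height_root gamma q m x HR), (height_root gamma q m y) by (rewrite <- E; exact HR).
  rewrite <- E, rhok_refl, Ei, (hair_dist_sym gamma m _ (y (S m))) by apply (Pk_S_base gamma q Hq m x Hx).
  pose proof (interval_metric_triangle Hd _ 0 _ Rx R0 Ry). lra.
Qed.

Lemma height_le_same_hair m x y : P (S m) x -> P (S m) y -> same_hair q m x y ->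
  height m x <= rho (S m) x y + height m y.
Proof.
  intros Hx Hy Sxy. destruct (same_hair_range m x y Hx Hy Sxy) as [Ei [Rx Ry]].
  assert (R0 : 0 <= 0 <= rad m (idx q m x)) by (pose proof (rad_pos m (idx q m x)); lra).
  rewrite rhok_S. destruct (excluded_middle_informative (same_hair q m x y)) as [_|]; [|contradiction].
  destruct Sxy as [HR E].
  rewrite (height_root gamma q m x HR), (height_root gamma q m y) by (rewrite <- E; exact HR). rewrite Ei.
  exact (interval_metric_triangle (hair_dist_interval_metric gamma Hg m _) _ _ _ Rx Ry R0).
Qed.

Lemma rhok_triangle m x y z : P m x -> P m y -> P m z -> rho m x z <= rho m x y + rho m y z.
Proof.
  revert x y z. induction m as [|m IH]; intros x y z Hx Hy Hz.
  - rewrite !rhok_0. rewrite Pk_0 in Hx, Hy, Hz.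
    apply (interval_metric_triangle (theta_r_interval_metric gamma Hg 1 ltac:(lra))); tauto.
  - destruct (Pk_S_base gamma q Hq m x Hx) as [Bx _]. destruct (Pk_S_base gamma q Hq m y Hy) as [By _].
    destruct (Pk_S_base gamma q Hq m z Hz) as [Bz _].
    pose proof (height_nonneg gamma q Hq Hg m y Hy).
    destruct (classic (same_hair q m x y)) as [Sxy|Sxy]; destruct (classic (same_hair q m y z)) as [Syz|Syz].
    + destruct (same_hair_range m x y Hx Hy Sxy) as [Exy' [Rx Ry]].
      destruct (same_hair_range m y z Hy Hz Syz) as [_ [_ Rz]].
      rewrite !rhok_S. do 3 (destruct (excluded_middle_informative _); [|exfalso; eauto using same_hair_trans]).
      rewrite Exy' in Rz |- *.
      exact (interval_metric_triangle (hair_dist_interval_metric gamma Hg m _) _ _ _ Rx Ry Rz).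
    + rewrite (rhok_S_off_hair m y z Syz). pose proof (height_le_same_hair m x y Hx Hy Sxy).
      pose proof (rhok_S_le_base m x z Hx Hz). rewrite <- (proj2 Sxy) in *. lra.
    + rewrite (rhok_S_off_hair m x y Sxy). rewrite (rhok_sym (S m) y z Hy Hz) in *.
      pose proof (height_le_same_hair m z y Hz Hy (same_hair_sym q m y z Syz)).
      pose proof (rhok_S_le_base m x z Hx Hz). rewrite <- (proj2 Syz) in *. lra.
    + rewrite (rhok_S_off_hair m x y Sxy), (rhok_S_off_hair m y z Syz). pose proof (rhok_S_le_base m x z Hx Hz).
      pose proof (IH _ _ _ Bx By Bz). lra.
Qed.

Lemma rhok_metric m : metric_on (P m) (rho m).
Proof.
  split; [apply rhok_nonneg|apply rhok_refl|apply rhok_sym|apply rhok_triangle].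
Qed.

End LevelMetric.

Section LevelInclusion.

Context (gamma : R -> nat -> R) (q : nat -> nat -> nat -> R).
Context (Hg : gamma_hyp gamma) (Hq : choices_hyp gamma q).

Notation P := (Pk gamma q).
Notation rho := (rhok gamma q).

Lemma Pk_incl m x : P m x -> P (S m) x.
Proof.
  intros Hx. assert (Hs := Pk_support gamma q m x Hx). rewrite Pk_S, (base_id m x Hs).
  split; [intros i Hi; apply Hs; lia|].
  destruct (classic (hair_root q m x)) as [[n Hn]|Hn].
  - right. exists n. split; [exact Hn|]. rewrite (Hs (S m)) by lia. pose proof (rad_pos m n). lra.
  - left. split; [exact Hx|split; [exact Hn|apply Hs; lia]].
Qed.

Lemma rhok_incl m x y : P m x -> P m y -> rho (S m) x y = rho m x y.
Proof.
  intros Hx Hy.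
  assert (Sx := Pk_support gamma q m x Hx). assert (Sy := Pk_support gamma q m y Hy).
  rewrite rhok_S, (base_id m x Sx), (base_id m y Sy), (Sx (S m)), (Sy (S m)) by lia.
  destruct (excluded_middle_informative (same_hair q m x y)) as [[HR E]|Sxy].
  - rewrite (base_id m x Sx), (base_id m y Sy) in E. subst y.
    rewrite (interval_metric_refl (hair_dist_interval_metric gamma Hg m _)), rhok_refl; auto.
  - unfold height. rewrite (Sx (S m)), (Sy (S m)) by lia.
    rewrite !(interval_metric_refl (hair_dist_interval_metric gamma Hg m _)).
    destruct (excluded_middle_informative _); destruct (excluded_middle_informative _); ring.
Qed.

Lemma Pk_incl_le m M x : (m <= M)%nat -> P m x -> P M x.
Proof. induction 1; auto using Pk_incl. Qed.

Lemma rhok_incl_le m M x y : (m <= M)%nat -> P m x -> P m y -> rho M x y = rho m x y.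
Proof.
  induction 1 as [|M HmM IH]; [reflexivity|]. intros Hx Hy.
  rewrite rhok_incl by (apply Pk_incl_le with m; auto). auto.
Qed.

Lemma rho_inf_eq m x y : P m x -> P m y -> rho_inf gamma q x y = rho m x y.
Proof.
  intros Hx Hy. unfold rho_inf.
  set (M := epsilon (inhabits 0%nat) (fun m => P m x /\ P m y)).
  assert (HM : P M x /\ P M y).
  { apply (epsilon_spec (inhabits 0%nat) (fun m => P m x /\ P m y)). exists m; auto. }
  destruct HM as [HMx HMy].
  rewrite <- (rhok_incl_le M (max m M) x y ltac:(lia) HMx HMy).
  apply rhok_incl_le; [lia|auto|auto].
Qed.

Definition hair_point (m n : nat) (h : R) : nat -> R := set_coord (q m n) (S m) h.

Lemma base_hair_point m n h : base m (hair_point m n h) = q m n.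
Proof. apply base_set_coord, (Pk_support gamma q m), (q_in gamma q Hq). Qed.

Lemma hair_point_in m n h : 0 <= h <= rad m n -> P (S m) (hair_point m n h).
Proof.
  intros Hh. rewrite Pk_S. split.
  - intros i Hi. unfold hair_point, set_coord. destruct (Nat.eqb_spec i (S m)); [lia|].
    apply (Pk_support gamma q m); [apply (q_in gamma q Hq)|lia].
  - right. exists n. rewrite base_hair_point. split; [reflexivity|]. unfold hair_point. rewrite set_coord_at. exact Hh.
Qed.

Lemma hair_point_0 m n : hair_point m n 0 = q m n.
Proof.
  apply functional_extensionality. intros i. unfold hair_point, set_coord.
  destruct (Nat.eqb_spec i (S m)) as [->|]; [|reflexivity].
  symmetry. apply (Pk_support gamma q m); [apply (q_in gamma q Hq)|lia].
Qed.

Lemma rhok_hair_point m n s t : rho (S m) (hair_point m n s) (hair_point m n t) = hair_dist gamma m n s t.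
Proof.
  rewrite rhok_S. destruct (excluded_middle_informative (same_hair q m (hair_point m n s) (hair_point m n t))) as [_|S1].
  - rewrite (idx_eq gamma q Hq m _ n (base_hair_point m n s)). unfold hair_point. rewrite !set_coord_at. reflexivity.
  - exfalso. apply S1. unfold same_hair. rewrite !base_hair_point. split; [exists n|]; reflexivity.
Qed.

Lemma hair_point_lipschitz m n s t : 0 <= s <= rad m n -> 0 <= t <= rad m n ->
  rho (S m) (hair_point m n s) (hair_point m n t) <= Rabs (s - t).
Proof.
  intros Hs Ht. rewrite rhok_hair_point. exact (interval_metric_le (hair_dist_interval_metric gamma Hg m n) s t Hs Ht).
Qed.

Lemma Pk_S_cases m x : P (S m) x ->
  (P m x /\ ~ hair_root q m x) \/ exists n h, 0 <= h <= rad m n /\ x = hair_point m n h.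
Proof.
  intros Hx. assert (Hx' := Hx). rewrite Pk_S in Hx'. destruct Hx' as [Hs [[H1 [H2 H3]]|[n [H1 H2]]]].
  - assert (E : base m x = x).
    { apply base_id. intros i Hi. destruct (Nat.eq_dec i (S m)) as [->|]; [exact H3|apply Hs; lia]. }
    rewrite E in *. left; auto.
  - right. exists n, (x (S m)). split; [exact H2|]. rewrite (set_coord_base m x Hs) at 1. rewrite H1. reflexivity.
Qed.

Lemma rhok_base_le m x : P (S m) x -> rho (S m) x (base m x) <= / 2 ^ (m + 2).
Proof.
  intros Hx. destruct (Pk_S_base gamma q Hq m x Hx) as [Bx [Rx _]].
  rewrite rhok_S, base_base.
  destruct (excluded_middle_informative (same_hair q m x (base m x))) as [[HR E]|S1].
  - rewrite base_at. specialize (Rx HR).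
    eapply Rle_trans; [apply (interval_metric_le (hair_dist_interval_metric gamma Hg m _)); [exact Rx|]|].
    + pose proof (rad_pos m (idx q m x)); lra.
    + rewrite Rminus_0_r, Rabs_right by lra. eapply Rle_trans; [apply Rx|]. unfold rad. apply inv_pow2_le. lia.
  - assert (nR : ~ hair_root q m (base m x)) by (intros HR; apply S1; split; [|rewrite base_base]; auto).
    rewrite (height_not_root gamma q m x nR), (height_not_root gamma q m (base m x)) by (rewrite base_base; auto).
    rewrite rhok_refl by auto. pose proof (inv_pow2_pos (m + 2)). lra.
Qed.

(* The radii at level m + j are at most 2^-(m + j + 2), so climbing down from level m + k
   to level m costs less than the geometric tail 2^-(m + 1). *)
Lemma rhok_dist_lower_level m k x : P (m + k) x ->
  exists y, P m y /\ rho (m + k) x y <= / 2 ^ (m + 1) - / 2 ^ (m + k + 1).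
Proof.
  revert x. induction k as [|k IH]; intros x Hx.
  - exists x. rewrite Nat.add_0_r in *. split; [exact Hx|]. rewrite rhok_refl; auto. lra.
  - replace (m + S k)%nat with (S (m + k)) in * by lia.
    destruct (Pk_S_base gamma q Hq (m + k) x Hx) as [Bx _].
    destruct (IH (base (m + k) x) Bx) as [y [Hy Hd]].
    exists y. split; [exact Hy|].
    assert (Hy' : P (m + k) y) by (apply Pk_incl_le with m; auto; lia).
    pose proof (rhok_triangle gamma q Hg Hq (S (m + k)) x (base (m + k) x) y Hx (Pk_incl _ _ Bx) (Pk_incl _ _ Hy')).
    rewrite (rhok_incl (m + k) (base (m + k) x) y Bx Hy') in H.
    pose proof (rhok_base_le (m + k) x Hx).
    assert (E : / 2 ^ (m + k + 1) = 2 * / 2 ^ (S (m + k) + 1)).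
    { replace (S (m + k) + 1)%nat with ((m + k + 1) + 1)%nat by lia. rewrite (inv_pow2_S (m + k + 1)).
      field. apply pow_nonzero; lra. }
    replace (m + k + 2)%nat with (S (m + k) + 1)%nat in H0 by lia. lra.
Qed.

End LevelInclusion.

Section LevelGeometry.

Context (gamma : R -> nat -> R) (q : nat -> nat -> nat -> R).
Context (Hg : gamma_hyp gamma) (Hq : choices_hyp gamma q).

Notation P := (Pk gamma q).
Notation rho := (rhok gamma q).

Definition level0_point (h : R) : nat -> R := fun i => if Nat.eqb i 0 then h else 0.

Lemma Pk_0_level0_point y : P 0 y <-> exists h, 0 <= h <= 1 /\ y = level0_point h.
Proof.
  rewrite Pk_0. split.
  - intros [H1 H2]. exists (y 0%nat). split; [exact H1|]. apply functional_extensionality. intros i.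
    unfold level0_point. destruct (Nat.eqb_spec i 0) as [->|]; [reflexivity|]. apply H2; lia.
  - intros [h [Hh ->]]. unfold level0_point. simpl. split; [exact Hh|].
    intros i Hi. destruct (Nat.eqb_spec i 0); [lia|reflexivity].
Qed.

Lemma level0_point_lipschitz s t : 0 <= s <= 1 -> 0 <= t <= 1 ->
  rho 0 (level0_point s) (level0_point t) <= Rabs (s - t).
Proof.
  intros Hs Ht. rewrite rhok_0.
  exact (interval_metric_le (theta_r_interval_metric gamma Hg 1 ltac:(lra)) s t Hs Ht).
Qed.

(* P_{m+1} is P_m together with the hairs; the n-th hair has diameter at most
   rad m n, which tends to 0, so the hairs accumulate only on P_m. *)
Lemma Pk_compact m : compact_space (P m) (rho m).
Proof.
  induction m as [|m IH].
  - apply (compact_space_ext (fun y => exists h, 0 <= h <= 1 /\ y = level0_point h) _ (rho 0) (rho 0)).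
    + apply compact_lipschitz_image, level0_point_lipschitz.
    + intros y. rewrite Pk_0_level0_point. reflexivity.
    + reflexivity.
  - apply (compact_accumulating_union (P m) (P (S m))
             (fun n y => exists h, 0 <= h <= rad m n /\ y = hair_point q m n h)).
    + apply rhok_metric; assumption.
    + apply Pk_incl.
    + intros n y [h [Hh ->]]. apply (hair_point_in gamma q Hq); exact Hh.
    + intros y Hy. destruct (Pk_S_cases gamma q m y Hy) as [[H1 _]|[n [h [Hh ->]]]]; [left; exact H1|].
      right. exists n, h. auto.
    + apply (compact_space_ext (P m) (P m) (rho m) (rho (S m))); [exact IH|reflexivity|].
      intros; symmetry; apply (rhok_incl gamma q Hg Hq); assumption.
    + intros n. apply compact_lipschitz_image, (hair_point_lipschitz gamma q Hg Hq).
    + intros delta Hdel. destruct (half_pow_lt delta Hdel) as [N HN].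
      exists N. intros n Hn y [h [Hh ->]]. exists (q m n). split; [apply (q_in gamma q Hq)|].
      rewrite <- (hair_point_0 gamma q Hq m n).
      pose proof (rad_pos m n).
      eapply Rle_lt_trans; [apply (hair_point_lipschitz gamma q Hg Hq); lra|].
      rewrite Rminus_0_l, Rabs_Ropp, Rabs_right by lra. eapply Rle_lt_trans; [apply Hh|].
      unfold rad. apply Rle_lt_trans with (/ 2 ^ n); [apply inv_pow2_le; lia|].
      rewrite <- pow_inv. apply HN; exact Hn.
Qed.

Lemma lip_path_to_base m x : P (S m) x ->
  exists l, l <= 2 * height gamma q m x /\ lip_path (P (S m)) (rho (S m)) x (base m x) l.
Proof.
  intros Hx. destruct (Pk_S_cases gamma q m x Hx) as [[H1 H2]|[n [h [Hh ->]]]].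
  - assert (E : base m x = x) by (apply base_id, (Pk_support gamma q m); exact H1).
    exists 0. rewrite E, (height_not_root gamma q m x) by (rewrite E; exact H2).
    split; [lra|]. apply lip_path_refl; [apply rhok_metric; assumption|exact Hx].
  - rewrite (base_hair_point gamma q Hq), <- (hair_point_0 gamma q Hq m n).
    pose proof (rad_pos m n).
    exists (Rabs (h - 0)). split.
    + rewrite (height_root gamma q m) by (exists n; apply (base_hair_point gamma q Hq)).
      rewrite (idx_eq gamma q Hq m _ n (base_hair_point gamma q Hq m n h)).
      unfold hair_point. rewrite set_coord_at.
      apply (interval_metric_ge (hair_dist_interval_metric gamma Hg m n)); lra.
    + apply (lip_path_segment (P (S m)) (rho (S m)) (hair_point q m n) 0 (rad m n)); try lra.
      * intros; apply (hair_point_in gamma q Hq); assumption.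
      * intros; apply (hair_point_lipschitz gamma q Hg Hq); assumption.
Qed.

(* Off a common hair, go down to the roots, follow a path in P_m and climb back up; each
   climb costs at most twice the height, which is how rho_{m+1} charges it. *)
Lemma Pk_lip_paths m x y : P m x -> P m y -> forall eps, 0 < eps ->
  exists L, L <= 2 * rho m x y + eps /\ lip_path (P m) (rho m) x y L.
Proof.
  revert x y. induction m as [|m IH]; intros x y Hx Hy eps He.
  - apply Pk_0_level0_point in Hx as [h1 [Hh1 ->]]. apply Pk_0_level0_point in Hy as [h2 [Hh2 ->]].
    exists (Rabs (h1 - h2)). split.
    + rewrite rhok_0. unfold level0_point; simpl.
      pose proof (interval_metric_ge (theta_r_interval_metric gamma Hg 1 ltac:(lra)) h1 h2 Hh1 Hh2). lra.
    + apply (lip_path_segment (P 0) (rho 0) level0_point 0 1); auto.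
      * intros s Hs. apply Pk_0_level0_point. exists s; auto.
      * apply level0_point_lipschitz.
  - assert (Hm := rhok_metric gamma q Hg Hq (S m)).
    destruct (classic (same_hair q m x y)) as [[HR E]|Sxy].
    + destruct (Pk_S_cases gamma q m x Hx) as [[H1 H2]|[n [hx [Hhx ->]]]].
      { exfalso. apply H2. rewrite base_id in HR; [exact HR|apply (Pk_support gamma q m); exact H1]. }
      destruct (Pk_S_cases gamma q m y Hy) as [[H1 H2]|[n' [hy [Hhy ->]]]].
      { exfalso. apply H2. rewrite (base_id m y) in E by (apply (Pk_support gamma q m); exact H1).
        rewrite <- E. exact HR. }
      rewrite !(base_hair_point gamma q Hq) in E. apply (q_inj gamma q Hq) in E. subst n'.
      exists (Rabs (hx - hy)). split.
      * rewrite (rhok_hair_point gamma q Hq).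
        pose proof (interval_metric_ge (hair_dist_interval_metric gamma Hg m n) hx hy Hhx Hhy). lra.
      * apply (lip_path_segment (P (S m)) (rho (S m)) (hair_point q m n) 0 (rad m n)); auto.
        -- intros; apply (hair_point_in gamma q Hq); assumption.
        -- intros; apply (hair_point_lipschitz gamma q Hg Hq); assumption.
    + destruct (Pk_S_base gamma q Hq m x Hx) as [Bx _]. destruct (Pk_S_base gamma q Hq m y Hy) as [By _].
      destruct (lip_path_to_base m x Hx) as [lx [Hlx Px]]. destruct (lip_path_to_base m y Hy) as [ly [Hly Py]].
      destruct (IH (base m x) (base m y) Bx By eps He) as [L [HL PL]].
      assert (PL' : lip_path (P (S m)) (rho (S m)) (base m x) (base m y) L).
      { apply (lip_path_map (P m) (rho m) (P (S m)) (rho (S m)) (fun a => a)); [apply Pk_incl| |exact PL].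
        intros. rewrite (rhok_incl gamma q Hg Hq); auto. lra. }
      exists (lx + L + ly). split.
      * rewrite (rhok_S_off_hair gamma q m x y Sxy). lra.
      * apply (lip_path_concat _ _ x (base m y) y (lx + L) ly Hm); [|apply lip_path_rev, Py].
        exact (lip_path_concat _ _ x (base m x) (base m y) lx L Hm Px PL').
Qed.

End LevelGeometry.

(** * The completion *)

Section Completion.

Context (gamma : R -> nat -> R) (q : nat -> nat -> nat -> R).
Context (Hg : gamma_hyp gamma) (Hq : choices_hyp gamma q).
Context {T : Type} (d : T -> T -> R) (e : (nat -> R) -> T) (Hcomp : is_completion gamma q d e).

Notation P := (Pk gamma q).
Notation rho := (rhok gamma q).

Let Hm := is_metric_metric_on d (proj1 Hcomp).

Lemma completion_isometry m x y : P m x -> P m y -> d (e x) (e y) = rho m x y.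
Proof.
  intros Hx Hy. pose proof Hcomp as [_ [_ [Hi _]]].
  rewrite Hi by (exists m; assumption). apply (rho_inf_eq gamma q Hg Hq); assumption.
Qed.

Lemma completion_hausdorff eps : 0 < eps -> exists K : nat, forall m, (K <= m)%nat ->
  hausdorff_le d (fun z => exists x, P m x /\ z = e x) (fun _ => True) eps.
Proof.
  intros He. pose proof Hcomp as [_ [_ [_ Hden]]].
  destruct (half_pow_lt (eps / 2) ltac:(lra)) as [K HK].
  exists K. intros m Hmk. split.
  - intros a _ e' He'. exists a. split; [exact Logic.I|]. rewrite (metric_refl Hm a Logic.I). lra.
  - intros b _ e' He'. destruct (Hden b (eps / 2) ltac:(lra)) as [x [[M HM] Hx]].
    rewrite (metric_sym Hm (e x) b Logic.I Logic.I) in Hx.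
    destruct (Compare_dec.le_lt_dec M m) as [HMm|HmM].
    + exists (e x). split; [exists x; split; [apply (Pk_incl_le gamma q M); assumption|reflexivity]|lra].
    + replace M with (m + (M - m))%nat in HM by lia.
      destruct (rhok_dist_lower_level gamma q Hg Hq m (M - m) x HM) as [y [Hy Hd]].
      exists (e y). split; [exists y; auto|].
      assert (Hy' : P (m + (M - m)) y) by (apply (Pk_incl_le gamma q m); auto; lia).
      rewrite <- (completion_isometry _ x y HM Hy') in Hd.
      pose proof (HK (m + 1)%nat ltac:(lia)) as HKm. rewrite pow_inv in HKm.
      pose proof (inv_pow2_pos (m + (M - m) + 1)).
      pose proof (metric_triangle Hm b (e x) (e y) Logic.I Logic.I Logic.I). lra.
Qed.

Lemma completion_totally_bounded : totally_bounded (fun _ => True) d.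
Proof.
  intros eps He. destruct (completion_hausdorff (eps / 3) ltac:(lra)) as [K HK].
  destruct (compact_totally_bounded (P K) (rho K) (rhok_metric gamma q Hg Hq K)
              (Pk_compact gamma q Hg Hq K) (eps / 3) ltac:(lra)) as [l0 Hl0].
  exists (map e l0). intros z _.
  destruct (HK K (le_n K)) as [_ H2]. destruct (H2 z Logic.I (eps / 2) ltac:(lra)) as [a [[y [Hy ->]] Hd]].
  destruct (Hl0 y Hy) as [p [Hin [Hpx Hpd]]].
  exists (e p). split; [apply in_map; exact Hin|split; [exact Logic.I|]].
  rewrite <- (completion_isometry K p y Hpx Hy) in Hpd.
  pose proof (metric_triangle Hm (e p) (e y) z Logic.I Logic.I Logic.I).
  rewrite (metric_sym Hm z) in Hd by exact Logic.I. lra.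
Qed.

Lemma completion_compact : compact_space (fun _ => True) d.
Proof.
  apply complete_totally_bounded_compact; [exact Hm|apply Hcomp|apply completion_totally_bounded].
Qed.

Lemma completion_quasiconvex : quasiconvex (fun _ => True) d 2.
Proof.
  pose proof Hcomp as [Hmet [_ [_ Hden]]].
  apply (quasiconvex_of_dense d Hmet (fun z => exists x, Pinf gamma q x /\ z = e x) 2 ltac:(lra)).
  - intros z eps He. destruct (Hden z eps He) as [x [Hx Hd]]. exists (e x). split; [exists x; auto|exact Hd].
  - intros z1 z2 [x [[m1 Hx] ->]] [y [[m2 Hy] ->]] eps He.
    assert (Hx' : P (max m1 m2) x) by (apply (Pk_incl_le gamma q m1); auto; lia).
    assert (Hy' : P (max m1 m2) y) by (apply (Pk_incl_le gamma q m2); auto; lia).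
    destruct (Pk_lip_paths gamma q Hg Hq (max m1 m2) x y Hx' Hy' eps He) as [L [HL PL]].
    exists L. split; [rewrite (completion_isometry _ x y Hx' Hy'); exact HL|].
    apply (lip_path_map (P (max m1 m2)) (rho (max m1 m2)) (fun _ => True) d e); auto.
    intros a b Ha Hb. rewrite (completion_isometry _ a b Ha Hb). lra.
Qed.

End Completion.

Theorem proposition4p9 (gamma : R -> nat -> R) (q : nat -> nat -> nat -> R) :
  gamma_hyp gamma -> choices_hyp gamma q ->
  (forall m : nat, compact_space (Pk gamma q m) (rhok gamma q m) /\
                   quasiconvex (Pk gamma q m) (rhok gamma q m) 2) /\
  (forall (T : Type) (d : T -> T -> R) (e : (nat -> R) -> T),
     is_completion gamma q d e ->
     compact_space (fun _ => True) d /\ quasiconvex (fun _ => True) d 2 /\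
     (forall eps, 0 < eps -> exists K : nat, forall m, (K <= m)%nat ->
        hausdorff_le d (fun z => exists x, Pk gamma q m x /\ z = e x) (fun _ => True) eps)).
Proof.
  intros Hg Hq. split.
  - intros m. split; [apply Pk_compact; assumption|].
    apply quasiconvex_of_lip_paths, Pk_lip_paths; assumption.
  - intros T d e Hc. split; [|split].
    + exact (completion_compact gamma q Hg Hq d e Hc).
    + exact (completion_quasiconvex gamma q Hg Hq d e Hc).
    + exact (completion_hausdorff gamma q Hg Hq d e Hc).
Qed.
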